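(* Let $S^1=\mathbb{R}/2\pi\mathbb{Z}$, identify $\mathcal{C}(S^1)=S^1\times(0,\infty)$ (metric $r^2\mathrm{d}\theta^2+\mathrm{d}r^2$) isometrically with $\mathbb{R}^2\setminus\{0\}$ via $(\theta,r)\mapsto re^{i\theta}$. Let $t_0<t_1$, let $t\mapsto\varphi(t)$, $t\in[t_0,t_1]$, be a smooth curve of orientation-preserving diffeomorphisms of $S^1$, set $\lambda(t)=\sqrt{\partial_x\varphi(t)}$, and suppose there is a smooth $p:[t_0,t_1]\times S^1\to\mathbb{R}$ with $$\ddot\varphi+2\frac{\dot\lambda}{\lambda}\dot\varphi=-\tfrac12(\partial_x p)\circ\varphi,\qquad \ddot\lambda-\lambda\dot\varphi^2=-\lambda\,p\circ\varphi .$$ Let $\Psi_{p(t)}(x,r)=\tfrac12 r^2p(t,x)$ on $\mathbb{R}^2\setminus\{0\}$ and assume that $(t_1-t_0)^2\,|\langle w,\nabla^2\Psi_{p(t)}(x,r)\,w\rangle|<\pi^2\|w\|^2$ for all $t\in[t_0,t_1]$, all $(x,r)$ and all $w\in\mathbb{R}^2$ (Euclidean Hessian and norm). Then for every smooth curve $t\mapsto\varphi_0(t)$ of orientation-preserving diffeomorphisms of $S^1$ with $\lambda_0(t)=\sqrt{\partial_x\varphi_0(t)}$ and $\varphi_0(t_i)=\varphi(t_i)$ for $i=0,1$, $$\int_{t_0}^{t_1}\!\!\int_{S^1}\big(\lambda^2\dot\varphi^2+\dot\lambda^2\big)\,\mathrm{d}x\,\mathrm{d}t\le\int_{t_0}^{t_1}\!\!\int_{S^1}\big(\lambda_0^2\dot\varphi_0^2+\dot\lambda_0^2\big)\,\mathrm{d}x\,\mathrm{d}t,$$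 with equality if and only if $(\varphi_0,\lambda_0)=(\varphi,\lambda)$ on $[t_0,t_1]$.
   Context: The system above is the geodesic equation of the right-invariant metric $\int_{S^1}u^2+\tfrac14(\partial_xu)^2\,\mathrm{d}x$ on $\mathrm{Diff}(S^1)$ (i.e. the Camassa-Holm equation $\partial_tu-\frac14\partial_{txx}u+3\partial_xu\,u-\frac12\partial_{xx}u\,\partial_xu-\frac14\partial_{xxx}u\,u=0$, $\partial_t\varphi=u\circ\varphi$) written for the map $x\mapsto(\varphi(x),\lambda(x))\in\mathcal{C}(S^1)$. The integrand $\lambda^2\dot\varphi^2+\dot\lambda^2$ is the squared Euclidean norm of $\partial_t\big(\lambda e^{i\varphi}\big)$. *)

From Stdlib Require Export Reals Lra ZArith.
Open Scope R_scope.

(* A function on S^1 = R/2piZ is a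
   2pi-periodic function on R; an orientation-preserving diffeomorphism of
   S^1 is represented by a lift R -> R with phi(x + 2pi) = phi(x) + 2pi and
   positive derivative. *)

Definition pd_t (f ft : R -> R -> R) : Prop :=
  forall t x, derivable_pt_lim (fun s => f s x) t (ft t x).

Definition pd_x (f fx : R -> R -> R) : Prop :=
  forall t x, derivable_pt_lim (fun y => f t y) x (fx t x).

Definition cont2 (f : R -> R -> R) : Prop :=
  forall t x eps, 0 < eps -> exists d, 0 < d /\
    forall s y, Rabs (s - t) < d -> Rabs (y - x) < d ->
      Rabs (f s y - f t x) < eps.

(* C^infinity on R^2: all partial derivatives of all orders exist and are
   jointly continuous. *)
CoInductive smooth2 (f : R -> R -> R) : Prop :=
  smooth2_intro : forall ft fx : R -> R -> R,
    cont2 f -> pd_t f ft -> pd_x f fx -> smooth2 ft -> smooth2 fx ->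
    smooth2 f.

Definition periodic_x (f : R -> R -> R) : Prop :=
  forall t x, f t (x + 2 * PI) = f t x.

Definition circle_lift (phi : R -> R -> R) : Prop :=
  forall t x, phi t (x + 2 * PI) = phi t x + 2 * PI.

Definition lam (phix : R -> R -> R) : R -> R -> R :=
  fun t x => sqrt (phix t x).

Definition is_RInt (f : R -> R) (a b v : R) : Prop :=
  exists pr : Riemann_integrable f a b, RiemannInt pr = v.

Definition energy (phit phix lamt : R -> R -> R) (t0 t1 E : R) : Prop :=
  exists I : R -> R,
    (forall t, t0 <= t <= t1 ->
       is_RInt (fun x => lam phix t x ^ 2 * phit t x ^ 2 + lamt t x ^ 2)
               0 (2 * PI) (I t)) /\
    is_RInt I t0 t1 E.

(* The function Psi(y) = 1/2 |y|^2 q(arg y) on R^2 \ {0}, written in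
   Cartesian coordinates y = (y1, y2) near the ray of angle x, where the
   angle is computed as x + atan(v/u) with (u, v) the coordinates of y
   rotated by -x (valid for u > 0, i.e. in a neighbourhood of r e^{ix}). *)
Definition Psi_loc (q : R -> R) (x y1 y2 : R) : R :=
  let u := y1 * cos x + y2 * sin x in
  let v := - y1 * sin x + y2 * cos x in
  / 2 * (y1 ^ 2 + y2 ^ 2) * q (x + atan (v / u)).

(* h = < w, Hess Psi (r e^{ix}) w > (Euclidean Hessian), i.e. the second
   derivative at s = 0 of s |-> Psi(r e^{ix} + s w). *)
Definition hess_form (q : R -> R) (x r w1 w2 h : R) : Prop :=
  let g := fun s => Psi_loc q x (r * cos x + s * w1) (r * sin x + s * w2) in
  exists g1 : R -> R, exists d, 0 < d /\
    (forall s, Rabs s < d -> derivable_pt_lim g s (g1 s)) /\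
    derivable_pt_lim g1 0 h.

(* Write [Y = lam e^{i phi}] and [Y0 = lam0 e^{i phi0}] as curves in the plane, pointwise
   in [x]. The energy densities are [|Y_t|^2] and [|Y0_t|^2], and the two equations say
   [Y_tt = - grad Psi(Y)]. With [E = Y0 - Y] and any [a] solving [a' = - w^2 - a^2],
   completing the square gives
     1/2 (|Y0_t|^2 - |Y_t|^2) = d/dt (<Y_t, E> + 1/2 a |E|^2)
                                + 1/2 |Y0_t - Y_t - a E|^2 + 1/2 w^2 |E|^2 - D
   up to [Psi(Y0) - Psi(Y)], whose integral over [S^1] vanishes (substitute [phi] and
   [phi0]); here [D = Psi(Y0) - Psi(Y) - <grad Psi(Y), E>]. For [w T < PI] the cotangent
   [a(t) = w cot (w (t - t0) + (PI - w T) / 2)] is defined on [[t0, t1]], and the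
   boundary term vanishes since [E = 0] at both ends, so
   [E0 - E >= int (w^2 |E|^2 - 2 D)]; letting [w -> PI / T] gives
   [E0 - E >= int (PI^2 / T^2 |E|^2 - 2 D)]. Taylor's formula along the segment from [Y]
   to [Y0] (in an angular chart, or radially when the segment meets the origin) and the
   Hessian bound make the last integrand nonnegative, and positive where [E <> 0].
   Equality therefore forces [E = 0], i.e. [phi0 = phi + 2 k PI]. *)

From Pilot Require Import Defs.
From Stdlib Require Import Reals Lra Lia ZArith FunctionalExtensionality.
From Coquelicot Require Import Coquelicot.
Open Scope R_scope.

Lemma periodic_2PI_Z (f : R -> R) : (forall x, f (x + 2 * PI) = f x) ->
  forall (k : Z) x, f (x + 2 * IZR k * PI) = f x.
Proof.
  intros Hf.
  assert (Hn : forall (n : nat) x, f (x + 2 * INR n * PI) = f x).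
  { induction n as [|n IH]; intros x.
    - simpl; f_equal; ring.
    - rewrite S_INR.
      replace (x + 2 * (INR n + 1) * PI) with ((x + 2 * INR n * PI) + 2 * PI) by ring.
      rewrite Hf; apply IH. }
  intros k x. destruct k as [|n|n].
  - simpl; f_equal; ring.
  - replace (IZR (Z.pos n)) with (INR (Pos.to_nat n))
      by (rewrite INR_IZR_INZ, positive_nat_Z; reflexivity).
    apply Hn.
  - replace (IZR (Z.neg n)) with (- INR (Pos.to_nat n))
      by (rewrite INR_IZR_INZ, positive_nat_Z, <- opp_IZR; reflexivity).
    rewrite <- (Hn (Pos.to_nat n) (x + 2 * - INR (Pos.to_nat n) * PI)).
    f_equal; ring.
Qed.

Lemma cos_add_2PI x : cos (x + 2 * PI) = cos x.
Proof. rewrite cos_plus, cos_2PI, sin_2PI. ring. Qed.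

Lemma sin_add_2PI x : sin (x + 2 * PI) = sin x.
Proof. rewrite sin_plus, cos_2PI, sin_2PI. ring. Qed.

Lemma cos_sin_eq_2PI_Z (a b : R) : cos a = cos b -> sin a = sin b ->
  exists k : Z, a = b + 2 * IZR k * PI.
Proof.
  intros Hc Hs.
  assert (H1 : cos (a - b) = 1).
  { rewrite cos_minus, Hc, Hs. pose proof (sin2_cos2 b) as H. unfold Rsqr in H. lra. }
  assert (H2 : sin ((a - b) / 2) = 0).
  { pose proof (cos_2a_sin ((a - b) / 2)) as H.
    replace (2 * ((a - b) / 2)) with (a - b) in H by field. nra. }
  destruct (sin_eq_0_0 _ H2) as [k Hk]. exists k. lra.
Qed.

Lemma angle_reduce (ph ph0 : R) :
  exists (k : Z) (th : R), - PI <= th < PI /\ ph0 = ph + th + 2 * IZR k * PI.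
Proof.
  assert (HPI := PI_RGT_0).
  set (z := (ph0 - ph - PI) / (2 * PI)).
  destruct (archimed z) as [Hk1 Hk2].
  exists (up z), (ph0 - ph - 2 * IZR (up z) * PI). split; [|ring].
  assert (Ez : (ph0 - ph - PI) = z * (2 * PI)) by (unfold z; field; lra).
  replace (ph0 - ph - 2 * IZR (up z) * PI) with (z * (2 * PI) + PI - 2 * IZR (up z) * PI)
    by lra.
  split; [apply Rmult_le_compat_l with (r := 2 * PI) in Hk2 |
          apply Rmult_lt_compat_l with (r := 2 * PI) in Hk1]; lra.
Qed.

(** * Polar coordinates on the cone *)

Definition polar_dist2 (l ph l0 ph0 : R) : R :=
  (l0 * cos ph0 - l * cos ph) ^ 2 + (l0 * sin ph0 - l * sin ph) ^ 2.

Lemma polar_dist2_ge0 l ph l0 ph0 : 0 <= polar_dist2 l ph l0 ph0.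
Proof. unfold polar_dist2. apply Rplus_le_le_0_compat; apply pow2_ge_0. Qed.

Lemma polar_dist2_shift l ph l0 ph0 (k : Z) :
  polar_dist2 l ph l0 (ph0 + 2 * IZR k * PI) = polar_dist2 l ph l0 ph0.
Proof.
  unfold polar_dist2.
  rewrite (periodic_2PI_Z cos cos_add_2PI), (periodic_2PI_Z sin sin_add_2PI). reflexivity.
Qed.

Lemma polar_dist2_eq0 l ph l0 ph0 : 0 < l -> 0 < l0 -> polar_dist2 l ph l0 ph0 = 0 ->
  l0 = l /\ exists k : Z, ph0 = ph + 2 * IZR k * PI.
Proof.
  unfold polar_dist2. intros Hl Hl0 HH.
  pose proof (pow2_ge_0 (l0 * cos ph0 - l * cos ph)).
  pose proof (pow2_ge_0 (l0 * sin ph0 - l * sin ph)).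
  assert (Ha : l0 * cos ph0 = l * cos ph) by (simpl in *; nra).
  assert (Hb : l0 * sin ph0 = l * sin ph) by (simpl in *; nra).
  assert (Hc := sin2_cos2 ph). assert (Hc0 := sin2_cos2 ph0). unfold Rsqr in *.
  assert (Hll : l0 = l).
  { assert (l0 ^ 2 = l ^ 2); [|nra].
    replace (l0 ^ 2) with ((l0 * cos ph0) ^ 2 + (l0 * sin ph0) ^ 2) by nra.
    rewrite Ha, Hb. nra. }
  subst l0. split; [reflexivity|].
  apply cos_sin_eq_2PI_Z; apply (Rmult_eq_reg_l l); lra.
Qed.

Definition chart_u (x y1 y2 : R) : R := y1 * cos x + y2 * sin x.
Definition chart_v (x y1 y2 : R) : R := - y1 * sin x + y2 * cos x.
Definition chart_angle (x y1 y2 : R) : R := x + atan (chart_v x y1 y2 / chart_u x y1 y2).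

Lemma Psi_loc_chart (q : R -> R) x y1 y2 :
  Psi_loc q x y1 y2 = / 2 * (y1 ^ 2 + y2 ^ 2) * q (chart_angle x y1 y2).
Proof. reflexivity. Qed.

Lemma chart_polar (x y1 y2 : R) : 0 < chart_u x y1 y2 ->
  y1 = sqrt (y1 ^ 2 + y2 ^ 2) * cos (chart_angle x y1 y2) /\
  y2 = sqrt (y1 ^ 2 + y2 ^ 2) * sin (chart_angle x y1 y2).
Proof.
  unfold chart_angle. set (u := chart_u x y1 y2). set (v := chart_v x y1 y2). intros Hu.
  assert (Huv : y1 ^ 2 + y2 ^ 2 = u ^ 2 + v ^ 2).
  { unfold u, v, chart_u, chart_v. pose proof (sin2_cos2 x) as H. unfold Rsqr in H. nra. }
  assert (Hs : sqrt (1 + (v / u)²) = sqrt (u ^ 2 + v ^ 2) / u).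
  { replace (1 + (v / u)²) with ((u ^ 2 + v ^ 2) / u ^ 2) by (unfold Rsqr; field; lra).
    rewrite sqrt_div_alt by nra. f_equal.
    replace (u ^ 2) with (u²) by (unfold Rsqr; ring). apply sqrt_Rsqr; lra. }
  assert (Hpos : 0 < sqrt (u ^ 2 + v ^ 2)) by (apply sqrt_lt_R0; nra).
  rewrite cos_plus, sin_plus, cos_atan, sin_atan, Hs, Huv.
  assert (Hc := sin2_cos2 x). unfold Rsqr in Hc.
  unfold u, v, chart_u, chart_v in *. split; field_simplify; try lra.
  all: try (split; lra).
  all: nra.
Qed.

Lemma chart_angle_indep (x b y1 y2 : R) : 0 < chart_u x y1 y2 -> 0 < chart_u b y1 y2 ->
  exists k : Z, chart_angle x y1 y2 = chart_angle b y1 y2 + 2 * IZR k * PI.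
Proof.
  intros H1 H2.
  destruct (chart_polar x y1 y2 H1) as [E1 E2].
  destruct (chart_polar b y1 y2 H2) as [F1 F2].
  set (r := sqrt (y1 ^ 2 + y2 ^ 2)) in *.
  assert (Hr : 0 < r).
  { unfold r; apply sqrt_lt_R0. unfold chart_u in H1.
    destruct (Req_dec y1 0); destruct (Req_dec y2 0); subst; nra. }
  apply cos_sin_eq_2PI_Z; apply (Rmult_eq_reg_l r); lra.
Qed.

Lemma Psi_loc_chart_indep (q : R -> R) (Hq : forall x, q (x + 2 * PI) = q x)
  (x b y1 y2 : R) : 0 < chart_u x y1 y2 -> 0 < chart_u b y1 y2 ->
  Psi_loc q x y1 y2 = Psi_loc q b y1 y2.
Proof.
  intros H1 H2. rewrite !Psi_loc_chart.
  destruct (chart_angle_indep x b y1 y2 H1 H2) as [k ->].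
  rewrite (periodic_2PI_Z q Hq). reflexivity.
Qed.

Lemma chart_angle_ray (a l : R) : chart_angle a (l * cos a) (l * sin a) = a.
Proof.
  unfold chart_angle, chart_v.
  replace (- (l * cos a) * sin a + l * sin a * cos a) with 0 by ring.
  unfold Rdiv. rewrite Rmult_0_l, atan_0. ring.
Qed.

Lemma chart_u_polar (l a b : R) : chart_u b (l * cos a) (l * sin a) = l * cos (a - b).
Proof. unfold chart_u. rewrite cos_minus. ring. Qed.

Lemma chart_u_ray (l a : R) : 0 < l -> 0 < chart_u a (l * cos a) (l * sin a).
Proof. intros Hl. rewrite chart_u_polar, Rminus_eq_0, cos_0. lra. Qed.

Lemma Psi_loc_ray (q : R -> R) (a l : R) :
  Psi_loc q a (l * cos a) (l * sin a) = / 2 * l ^ 2 * q a.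
Proof.
  rewrite Psi_loc_chart, chart_angle_ray.
  assert (Hc := sin2_cos2 a). unfold Rsqr in Hc.
  replace ((l * cos a) ^ 2 + (l * sin a) ^ 2) with (l ^ 2 * (sin a * sin a + cos a * cos a))
    by ring.
  rewrite Hc; ring.
Qed.

(** * Second-order bound on [Psi] *)

(** [Psi_defect q dq l ph l0 ph0] is [Psi(Y0) - Psi(Y) - <grad Psi(Y), Y0 - Y>] for
    [Psi = 1/2 r^2 q], [Y = l e^{i ph}], [Y0 = l0 e^{i ph0}] and [dq = q']. *)
Definition Psi_defect (q dq : R -> R) (l ph l0 ph0 : R) : R :=
  let E1 := l0 * cos ph0 - l * cos ph in
  let E2 := l0 * sin ph0 - l * sin ph in
  / 2 * l0 ^ 2 * q ph0 - / 2 * l ^ 2 * q ph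
  - ((l * cos ph * E1 + l * sin ph * E2) * q ph
     + / 2 * (l * cos ph * E2 - l * sin ph * E1) * dq ph).

Lemma Psi_defect_shift (q dq : R -> R) (Hq : forall x, q (x + 2 * PI) = q x)
  l ph l0 ph0 (k : Z) :
  Psi_defect q dq l ph l0 (ph0 + 2 * IZR k * PI) = Psi_defect q dq l ph l0 ph0.
Proof.
  unfold Psi_defect.
  rewrite (periodic_2PI_Z q Hq), (periodic_2PI_Z cos cos_add_2PI),
    (periodic_2PI_Z sin sin_add_2PI).
  reflexivity.
Qed.

Lemma Psi_defect_eq0 (q dq : R -> R) (Hq : forall x, q (x + 2 * PI) = q x)
  l ph l0 ph0 : 0 < l -> 0 < l0 -> polar_dist2 l ph l0 ph0 = 0 ->
  Psi_defect q dq l ph l0 ph0 = 0.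
Proof.
  intros Hl Hl0 HH. destruct (polar_dist2_eq0 _ _ _ _ Hl Hl0 HH) as [-> [k ->]].
  rewrite Psi_defect_shift by exact Hq. unfold Psi_defect. ring.
Qed.

Lemma taylor2_lt (g g1 g2 : R -> R) (K : R) :
  (forall s, 0 <= s <= 1 -> derivable_pt_lim g s (g1 s)) ->
  (forall s, 0 <= s <= 1 -> derivable_pt_lim g1 s (g2 s)) ->
  (forall s, 0 <= s <= 1 -> g2 s < K) ->
  g 1 - g 0 - g1 0 < K / 2.
Proof.
  intros Dg Dg1 Hg2.
  assert (Hm' : forall s, 0 < s <= 1 -> g1 s - K * s - g1 0 < 0).
  { intros s Hs.
    destruct (MVT_cor2 (fun s => g1 s - K * s) (fun s => g2 s - K) 0 s) as [c [Ec Hc]];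
      [lra| |].
    - intros c Hc. replace (g2 c - K) with (g2 c - K * 1) by ring.
      apply derivable_pt_lim_minus; [apply Dg1; lra|].
      apply derivable_pt_lim_scal, derivable_pt_lim_id.
    - assert (g2 c < K) by (apply Hg2; lra). nra. }
  destruct (MVT_cor2 (fun s => g s - (K * s ^ 2 / 2 + g1 0 * s))
              (fun s => g1 s - K * s - g1 0) 0 1) as [c [Ec Hc]]; [lra| |].
  - intros c Hc. replace (g1 c - K * c - g1 0) with (g1 c - (K * c + g1 0)) by ring.
    apply derivable_pt_lim_minus; [apply Dg; lra|].
    apply is_derive_Reals. auto_derive; [auto|field].
  - specialize (Hm' c ltac:(lra)). simpl in Ec. lra.
Qed.

Lemma derivable_pt_lim_shift f s x l : derivable_pt_lim f (s + x) l ->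
  derivable_pt_lim (fun y => f (s + y)) x l.
Proof.
  intros H. apply is_derive_Reals. apply is_derive_Reals in H.
  apply (is_derive_ext (fun y => f (s + y))); [reflexivity|].
  replace l with (scal 1 l) by (unfold scal; simpl; unfold mult; simpl; ring).
  apply (is_derive_comp f (fun y => s + y)); [exact H|auto_derive; auto; ring].
Qed.

Lemma locally_Rabs_lt (s0 d : R) : Rabs s0 < d -> locally s0 (fun s => Rabs s < d).
Proof.
  intros H. assert (Hp : 0 < d - Rabs s0) by lra.
  exists (mkposreal _ Hp). intros y Hy. change (Rabs (y - s0) < d - Rabs s0) in Hy.
  pose proof (Rabs_triang_inv y s0). lra.
Qed.

Lemma affine_pos_nbhd (u0 u1 : R) : 0 < u0 -> 0 < u1 ->
  exists d, 0 < d /\ forall s, - d < s < 1 + d -> 0 < u0 + s * (u1 - u0).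
Proof.
  intros H0 H1. set (a := Rabs (u1 - u0) + 1).
  assert (Ha : 0 < a) by (pose proof (Rabs_pos (u1 - u0)); unfold a; lra).
  exists (Rmin u0 u1 / a). split; [apply Rdiv_lt_0_compat; [apply Rmin_pos|]; lra|].
  intros s Hs.
  assert (Hd : Rmin u0 u1 / a * a = Rmin u0 u1) by (field; lra).
  pose proof (Rmin_l u0 u1). pose proof (Rmin_r u0 u1).
  pose proof (Rle_abs (u1 - u0)). pose proof (Rle_abs (- (u1 - u0))). rewrite Rabs_Ropp in *.
  destruct (Rle_dec 0 s); destruct (Rle_dec s 1); [nra| | |lra].
  - assert (Rabs (u1 - u0) * (s - 1) < Rmin u0 u1) by (unfold a in *; nra). nra.
  - assert (Rabs (u1 - u0) * (- s) < Rmin u0 u1) by (unfold a in *; nra). nra.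
Qed.

Lemma chart_u2_v2 x y1 y2 : chart_u x y1 y2 ^ 2 + chart_v x y1 y2 ^ 2 = y1 ^ 2 + y2 ^ 2.
Proof.
  unfold chart_u, chart_v. pose proof (sin2_cos2 x) as H. unfold Rsqr in H.
  replace (y1 ^ 2 + y2 ^ 2) with ((y1 ^ 2 + y2 ^ 2) * (sin x * sin x + cos x * cos x))
    by (rewrite H; ring).
  ring.
Qed.

Lemma chart_u_norm_pos x y1 y2 : 0 < chart_u x y1 y2 -> 0 < y1 ^ 2 + y2 ^ 2.
Proof.
  intros Hu. rewrite <- (chart_u2_v2 x).
  pose proof (pow2_ge_0 (chart_v x y1 y2)). pose proof (pow_lt _ 2 Hu). lra.
Qed.

Lemma chart_u_pos_near_ray x r e1 e2 sg : 0 < r ->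
  Rabs sg * (Rabs e1 + Rabs e2 + 1) < r ->
  0 < chart_u x (r * cos x + sg * e1) (r * sin x + sg * e2).
Proof.
  intros Hr Hsg. unfold chart_u.
  assert (Hc := sin2_cos2 x). unfold Rsqr in Hc.
  assert (Hb : Rabs (e1 * cos x + e2 * sin x) <= Rabs e1 + Rabs e2).
  { eapply Rle_trans; [apply Rabs_triang|]. rewrite !Rabs_mult.
    pose proof (Rabs_pos e1); pose proof (Rabs_pos e2).
    assert (Rabs (cos x) <= 1) by (apply Rabs_le; apply COS_bound).
    assert (Rabs (sin x) <= 1) by (apply Rabs_le; apply SIN_bound).
    nra. }
  assert (Hx : Rabs (sg * (e1 * cos x + e2 * sin x)) < r).
  { rewrite Rabs_mult. pose proof (Rabs_pos sg). nra. }
  apply Rabs_def2 in Hx.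
  replace ((r * cos x + sg * e1) * cos x + (r * sin x + sg * e2) * sin x)
    with (r * (sin x * sin x + cos x * cos x) + sg * (e1 * cos x + e2 * sin x)) by ring.
  rewrite Hc. lra.
Qed.

Section HessianBound.
Variables (q dq ddq : R -> R) (T : R).
Hypotheses (T_pos : 0 < T)
  (q_per : forall x, q (x + 2 * PI) = q x)
  (dq_per : forall x, dq (x + 2 * PI) = dq x)
  (q_deriv : forall x, derivable_pt_lim q x (dq x))
  (dq_deriv : forall x, derivable_pt_lim dq x (ddq x))
  (hess_bound : forall x r w1 w2 h, 0 < r -> (w1 <> 0 \/ w2 <> 0) ->
     hess_form q x r w1 w2 h -> T ^ 2 * Rabs h < PI ^ 2 * (w1 ^ 2 + w2 ^ 2)).

(* Along the ray through [e^{i th}], [Psi] is [s |-> 1/2 (1 + s)^2 q th]. *)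
Lemma q_radial_bound (th : R) : T ^ 2 * Rabs (q th) < PI ^ 2.
Proof.
  assert (Hc := sin2_cos2 th). unfold Rsqr in Hc.
  assert (Hw : cos th <> 0 \/ sin th <> 0).
  { destruct (Req_dec (cos th) 0); [right|left]; auto. intro. nra. }
  assert (H := hess_bound th 1 (cos th) (sin th) (q th) Rlt_0_1 Hw).
  replace (PI ^ 2 * (cos th ^ 2 + sin th ^ 2)) with (PI ^ 2) in H by (simpl; nra).
  apply H. exists (fun s => (1 + s) * q th), 1. split; [lra|split].
  - intros s _.
    apply (derivable_pt_lim_ext (fun s => / 2 * (1 + s) ^ 2 * q th)).
    + intros y. rewrite <- (Psi_loc_ray q th (1 + y)). f_equal; ring.
    + apply is_derive_Reals. auto_derive; [auto|field].
  - apply is_derive_Reals. auto_derive; [auto|ring].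
Qed.

Lemma q_lt_PI2 (th : R) : q th < PI ^ 2 / T ^ 2.
Proof.
  assert (HT2 : 0 < T ^ 2) by (apply pow_lt; lra).
  pose proof (q_radial_bound th). pose proof (Rle_abs (q th)).
  apply (Rmult_lt_reg_l (T ^ 2)); [lra|]. field_simplify; [|lra]. nra.
Qed.

Section Segment.
Variables (b Y1 Y2 e1 e2 : R).

Definition seg_u (s : R) : R := chart_u b (Y1 + s * e1) (Y2 + s * e2).
Definition seg_angle (s : R) : R := chart_angle b (Y1 + s * e1) (Y2 + s * e2).
Definition seg_Psi (s : R) : R := Psi_loc q b (Y1 + s * e1) (Y2 + s * e2).
Definition seg_dPsi (s : R) : R :=
  ((Y1 + s * e1) * e1 + (Y2 + s * e2) * e2) * q (seg_angle s)
  + / 2 * (Y1 * e2 - Y2 * e1) * dq (seg_angle s).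

Lemma seg_angle_deriv s : 0 < seg_u s ->
  derivable_pt_lim seg_angle s
    ((Y1 * e2 - Y2 * e1) / ((Y1 + s * e1) ^ 2 + (Y2 + s * e2) ^ 2)).
Proof.
  unfold seg_u. intros Hu.
  rewrite <- (chart_u2_v2 b).
  assert (Hc := sin2_cos2 b). unfold Rsqr in Hc.
  replace (Y1 * e2 - Y2 * e1) with
    (chart_v b e1 e2 * chart_u b (Y1 + s * e1) (Y2 + s * e2)
     - chart_v b (Y1 + s * e1) (Y2 + s * e2) * chart_u b e1 e2).
  2:{ unfold chart_u, chart_v.
      replace (Y1 * e2 - Y2 * e1) with ((Y1 * e2 - Y2 * e1) * (sin b * sin b + cos b * cos b))
        by (rewrite Hc; ring).
      ring. }
  unfold seg_angle, chart_angle, chart_u, chart_v in *.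
  apply is_derive_Reals. auto_derive; [lra|].
  field. split; [|lra].
  pose proof (pow2_ge_0 (- (Y1 + s * e1) * sin b + (Y2 + s * e2) * cos b)). simpl in *. nra.
Qed.

Lemma seg_Psi_deriv s : 0 < seg_u s -> derivable_pt_lim seg_Psi s (seg_dPsi s).
Proof.
  intros Hu. assert (Hn := chart_u_norm_pos _ _ _ Hu).
  assert (Ha := seg_angle_deriv s Hu). apply is_derive_Reals in Ha.
  apply is_derive_Reals.
  apply (is_derive_ext (fun s => / 2 * ((Y1 + s * e1) ^ 2 + (Y2 + s * e2) ^ 2)
                                  * q (seg_angle s))); [reflexivity|].
  auto_derive.
  - repeat split; auto; eexists; solve [exact Ha | apply is_derive_Reals, q_deriv].
  - replace (Derive (fun x : R => seg_angle x) s) with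
      ((Y1 * e2 - Y2 * e1) / ((Y1 + s * e1) ^ 2 + (Y2 + s * e2) ^ 2))
      by (symmetry; apply is_derive_unique, Ha).
    replace (Derive (fun x : R => q x) (seg_angle s)) with (dq (seg_angle s))
      by (symmetry; apply is_derive_unique, is_derive_Reals, q_deriv).
    unfold seg_dPsi. field. lra.
Qed.

Lemma seg_dPsi_deriv s : 0 < seg_u s -> derivable_pt_lim seg_dPsi s (Derive seg_dPsi s).
Proof.
  intros Hu. assert (Ha := seg_angle_deriv s Hu). apply is_derive_Reals in Ha.
  apply is_derive_Reals, Derive_correct. unfold seg_dPsi.
  auto_derive. repeat split; eexists;
    solve [exact Ha | apply is_derive_Reals, q_deriv | apply is_derive_Reals, dq_deriv].
Qed.

(* At [y = Y + s e], written [r e^{ix}], the second derivative of [seg_Psi] is the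
   Hessian form of [hess_form q x r e1 e2], computed in the chart [x] instead of [b]. *)
Lemma seg_hessian_bound s : 0 < seg_u s -> (e1 <> 0 \/ e2 <> 0) ->
  (exists d, 0 < d /\ forall sg, Rabs sg < d -> 0 < seg_u (s + sg)) ->
  T ^ 2 * Rabs (Derive seg_dPsi s) < PI ^ 2 * (e1 ^ 2 + e2 ^ 2).
Proof.
  intros Hu He [d [Hd Hdu]].
  destruct (chart_polar b (Y1 + s * e1) (Y2 + s * e2) Hu) as [P1 P2].
  set (r := sqrt ((Y1 + s * e1) ^ 2 + (Y2 + s * e2) ^ 2)) in *.
  set (x := chart_angle b (Y1 + s * e1) (Y2 + s * e2)) in *.
  assert (Hr : 0 < r) by (apply sqrt_lt_R0, (chart_u_norm_pos _ _ _ Hu)).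
  apply (hess_bound x r e1 e2 _ Hr He).
  set (M := Rabs e1 + Rabs e2 + 1).
  assert (HM : 0 < M) by (unfold M; pose proof (Rabs_pos e1); pose proof (Rabs_pos e2); lra).
  exists (fun sg => seg_dPsi (s + sg)), (Rmin d (r / M)).
  split; [apply Rmin_pos; [lra|apply Rdiv_lt_0_compat; lra]|split].
  - intros sg0 Hsg0. apply is_derive_Reals.
    apply (is_derive_ext_loc (fun sg => seg_Psi (s + sg))).
    + eapply filter_imp; [|apply (locally_Rabs_lt sg0 _ Hsg0)].
      intros sg Hsg. simpl.
      assert (Hsgr : Rabs sg * M < r).
      { pose proof (Rmin_r d (r / M)).
        apply (Rmult_lt_reg_r (/ M)); [apply Rinv_0_lt_compat; lra|].
        field_simplify; lra. }
      unfold seg_Psi.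
      replace (Y1 + (s + sg) * e1) with (r * cos x + sg * e1) by (rewrite <- P1; ring).
      replace (Y2 + (s + sg) * e2) with (r * sin x + sg * e2) by (rewrite <- P2; ring).
      apply Psi_loc_chart_indep; [exact q_per| |].
      * replace (r * cos x + sg * e1) with (Y1 + (s + sg) * e1) by (rewrite <- P1; ring).
        replace (r * sin x + sg * e2) with (Y2 + (s + sg) * e2) by (rewrite <- P2; ring).
        apply (Hdu sg). pose proof (Rmin_l d (r / M)). simpl in Hsg. lra.
      * exact (chart_u_pos_near_ray x r e1 e2 sg Hr Hsgr).
    + apply is_derive_Reals, derivable_pt_lim_shift, seg_Psi_deriv, Hdu.
      pose proof (Rmin_l d (r / M)). lra.
  - apply derivable_pt_lim_shift. rewrite Rplus_0_r. apply seg_dPsi_deriv, Hu.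
Qed.

Lemma seg_taylor_bound : (e1 <> 0 \/ e2 <> 0) -> 0 < seg_u 0 -> 0 < seg_u 1 ->
  seg_Psi 1 - seg_Psi 0 - seg_dPsi 0 < PI ^ 2 / (2 * T ^ 2) * (e1 ^ 2 + e2 ^ 2).
Proof.
  intros He H0 H1.
  destruct (affine_pos_nbhd _ _ H0 H1) as [d [Hd Hpos]].
  assert (Hu : forall s, - d < s < 1 + d -> 0 < seg_u s).
  { intros s Hs. replace (seg_u s) with (seg_u 0 + s * (seg_u 1 - seg_u 0))
      by (unfold seg_u, chart_u; ring).
    apply Hpos, Hs. }
  set (K := PI ^ 2 * (e1 ^ 2 + e2 ^ 2) / T ^ 2).
  assert (HT2 : 0 < T ^ 2) by (apply pow_lt; lra).
  replace (PI ^ 2 / (2 * T ^ 2) * (e1 ^ 2 + e2 ^ 2)) with (K / 2) by (unfold K; field; lra).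
  apply (taylor2_lt seg_Psi seg_dPsi (Derive seg_dPsi)).
  - intros s Hs. apply seg_Psi_deriv, Hu. lra.
  - intros s Hs. apply seg_dPsi_deriv, Hu. lra.
  - intros s Hs.
    assert (Hh : T ^ 2 * Rabs (Derive seg_dPsi s) < PI ^ 2 * (e1 ^ 2 + e2 ^ 2)).
    { apply seg_hessian_bound; [apply Hu; lra|exact He|].
      exists d. split; [lra|]. intros sg Hsg. apply Hu. apply Rabs_def2 in Hsg. lra. }
    pose proof (Rle_abs (Derive seg_dPsi s)).
    unfold K. apply (Rmult_lt_reg_l (T ^ 2)); [lra|].
    field_simplify; [|lra]. nra.
Qed.

End Segment.

Lemma Psi_loc_ray_chart (b l a : R) : 0 < l -> 0 < chart_u b (l * cos a) (l * sin a) ->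
  Psi_loc q b (l * cos a) (l * sin a) = / 2 * l ^ 2 * q a.
Proof.
  intros Hl Hb. rewrite <- (Psi_loc_chart_indep q q_per a b) by (auto; apply chart_u_ray, Hl).
  apply Psi_loc_ray.
Qed.

(* The segment from [l e^{i ph}] to [l0 e^{i ph0}] with [|ph0 - ph| < PI] stays in
   the chart centred at the bisecting angle [b]. *)
Lemma Psi_defect_lt_chart (l l0 ph th : R) : 0 < l -> 0 < l0 -> - PI < th < PI ->
  polar_dist2 l ph l0 (ph + th) <> 0 ->
  Psi_defect q dq l ph l0 (ph + th)
    < PI ^ 2 / (2 * T ^ 2) * polar_dist2 l ph l0 (ph + th).
Proof.
  intros Hl Hl0 Hth HH. set (ph0 := ph + th). set (b := ph + th / 2).
  set (e1 := l0 * cos ph0 - l * cos ph). set (e2 := l0 * sin ph0 - l * sin ph).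
  assert (He : e1 <> 0 \/ e2 <> 0).
  { destruct (Req_dec e1 0) as [E|E]; [right|left; auto].
    intro E'. apply HH. change (e1 ^ 2 + e2 ^ 2 = 0). rewrite E, E'. ring. }
  assert (Hcb : 0 < cos (th / 2)) by (apply cos_gt_0; lra).
  assert (Hu0 : 0 < chart_u b (l * cos ph) (l * sin ph)).
  { rewrite chart_u_polar. replace (ph - b) with (- (th / 2)) by (unfold b; field).
    rewrite cos_neg. nra. }
  assert (Hu1 : 0 < chart_u b (l0 * cos ph0) (l0 * sin ph0)).
  { rewrite chart_u_polar. replace (ph0 - b) with (th / 2) by (unfold ph0, b; field). nra. }
  assert (E0 : forall y z, y + 0 * z = y) by (intros; ring).
  assert (E1 : forall y z, y + 1 * z = y + z) by (intros; ring).
  assert (Y1e : l * cos ph + e1 = l0 * cos ph0) by (unfold e1; ring).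
  assert (Y2e : l * sin ph + e2 = l0 * sin ph0) by (unfold e2; ring).
  pose proof (seg_taylor_bound b (l * cos ph) (l * sin ph) e1 e2 He) as G.
  unfold seg_u, seg_Psi, seg_dPsi, seg_angle in G. rewrite !E0, !E1, Y1e, Y2e in G.
  specialize (G Hu0 Hu1).
  rewrite (Psi_loc_ray_chart b l ph), (Psi_loc_ray_chart b l0 ph0) in G by assumption.
  destruct (chart_angle_indep b ph _ _ Hu0 (chart_u_ray l ph Hl)) as [k Hk].
  rewrite Hk, chart_angle_ray, (periodic_2PI_Z q q_per), (periodic_2PI_Z dq dq_per) in G.
  exact G.
Qed.

(* Through the origin the defect only involves radial second derivatives. *)
Lemma Psi_defect_lt_antipodal (l l0 ph : R) : 0 < l -> 0 < l0 ->
  Psi_defect q dq l ph l0 (ph + - PI)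
    < PI ^ 2 / (2 * T ^ 2) * polar_dist2 l ph l0 (ph + - PI).
Proof.
  intros Hl Hl0.
  assert (HT2 : 0 < T ^ 2) by (apply pow_lt; lra).
  assert (Q0 := q_lt_PI2 (ph + - PI)). assert (Q := q_lt_PI2 ph).
  set (A := PI ^ 2 / T ^ 2) in *.
  replace (PI ^ 2 / (2 * T ^ 2)) with (A / 2) by (unfold A; field; lra).
  unfold Psi_defect, polar_dist2.
  replace (ph + - PI) with (ph - PI) in * by ring.
  rewrite cos_minus, sin_minus, cos_PI, sin_PI.
  assert (Hc := sin2_cos2 ph). unfold Rsqr in Hc.
  replace (l * cos ph * (l0 * (cos ph * -1 + sin ph * 0) - l * cos ph) +
    l * sin ph * (l0 * (sin ph * -1 - cos ph * 0) - l * sin ph))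
    with (- (l * (l0 + l)) * (sin ph * sin ph + cos ph * cos ph)) by ring.
  replace (l * cos ph * (l0 * (sin ph * -1 - cos ph * 0) - l * sin ph) -
    l * sin ph * (l0 * (cos ph * -1 + sin ph * 0) - l * cos ph)) with 0 by ring.
  replace ((l0 * (cos ph * -1 + sin ph * 0) - l * cos ph) ^ 2 +
    (l0 * (sin ph * -1 - cos ph * 0) - l * sin ph) ^ 2)
    with ((l0 + l) ^ 2 * (sin ph * sin ph + cos ph * cos ph)) by ring.
  rewrite Hc.
  assert (0 < l0 ^ 2 * (A - q (ph - PI))) by (apply Rmult_lt_0_compat; [apply pow_lt|]; lra).
  assert (0 < (l ^ 2 + 2 * l * l0) * (A - q ph)) by (apply Rmult_lt_0_compat; nra).
  nra.
Qed.

Lemma Psi_defect_lt (l l0 ph ph0 : R) : 0 < l -> 0 < l0 ->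
  polar_dist2 l ph l0 ph0 <> 0 ->
  Psi_defect q dq l ph l0 ph0 < PI ^ 2 / (2 * T ^ 2) * polar_dist2 l ph l0 ph0.
Proof.
  intros Hl Hl0 HH.
  destruct (angle_reduce ph ph0) as [k [th [Hth ->]]].
  rewrite Psi_defect_shift, polar_dist2_shift in * by exact q_per.
  destruct (Req_dec th (- PI)) as [->|Hpi].
  - apply Psi_defect_lt_antipodal; assumption.
  - apply Psi_defect_lt_chart; auto. lra.
Qed.

End HessianBound.

(** * The calibration identity *)

(** In the plane, [Y = l e^{i f}] and [Y0 = l0 e^{i f0}] are the two curves, [V = Y_t],
    [A = Y_tt], [U = Y0_t] and [E = Y0 - Y]; [a] is a scalar weight. *)
Definition bdry_term (l lt f ft l0 f0 a : R) : R :=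
  let Y1 := l * cos f in let Y2 := l * sin f in
  let V1 := lt * cos f - l * ft * sin f in let V2 := lt * sin f + l * ft * cos f in
  let E1 := l0 * cos f0 - Y1 in let E2 := l0 * sin f0 - Y2 in
  V1 * E1 + V2 * E2 + / 2 * a * (E1 ^ 2 + E2 ^ 2).

Definition bdry_term_dt (l lt ltt f ft ftt l0 l0t f0 f0t a at_ : R) : R :=
  let Y1 := l * cos f in let Y2 := l * sin f in
  let V1 := lt * cos f - l * ft * sin f in let V2 := lt * sin f + l * ft * cos f in
  let A1 := ltt * cos f - 2 * lt * ft * sin f - l * ftt * sin f - l * ft ^ 2 * cos f in
  let A2 := ltt * sin f + 2 * lt * ft * cos f + l * ftt * cos f - l * ft ^ 2 * sin f in
  let E1 := l0 * cos f0 - Y1 in let E2 := l0 * sin f0 - Y2 in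
  let U1 := l0t * cos f0 - l0 * f0t * sin f0 in let U2 := l0t * sin f0 + l0 * f0t * cos f0 in
  A1 * E1 + A2 * E2 + V1 * (U1 - V1) + V2 * (U2 - V2) + / 2 * at_ * (E1 ^ 2 + E2 ^ 2)
   + a * (E1 * (U1 - V1) + E2 * (U2 - V2)).

Definition accel_dot (l lt ltt f ft ftt l0 f0 : R) : R :=
  let A1 := ltt * cos f - 2 * lt * ft * sin f - l * ftt * sin f - l * ft ^ 2 * cos f in
  let A2 := ltt * sin f + 2 * lt * ft * cos f + l * ftt * cos f - l * ft ^ 2 * sin f in
  let E1 := l0 * cos f0 - l * cos f in let E2 := l0 * sin f0 - l * sin f in
  A1 * E1 + A2 * E2.

Definition calib_residual (l lt f ft l0 l0t f0 f0t a : R) : R :=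
  let V1 := lt * cos f - l * ft * sin f in let V2 := lt * sin f + l * ft * cos f in
  let E1 := l0 * cos f0 - l * cos f in let E2 := l0 * sin f0 - l * sin f in
  let U1 := l0t * cos f0 - l0 * f0t * sin f0 in let U2 := l0t * sin f0 + l0 * f0t * cos f0 in
  / 2 * ((U1 - V1 - a * E1) ^ 2 + (U2 - V2 - a * E2) ^ 2).

Lemma calib_residual_ge0 l lt f ft l0 l0t f0 f0t a :
  0 <= calib_residual l lt f ft l0 l0t f0 f0t a.
Proof.
  unfold calib_residual. apply Rmult_le_pos; [lra|].
  apply Rplus_le_le_0_compat; apply pow2_ge_0.
Qed.

(* Completing the square in [U - V - a E]; [bdry_term_dt] is evaluated with
   [a' = - w^2 - a^2]. *)
Lemma energy_density_calibration (l lt ltt f ft ftt l0 l0t f0 f0t a w : R) :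
  / 2 * ((l0 ^ 2 * f0t ^ 2 + l0t ^ 2) - (l ^ 2 * ft ^ 2 + lt ^ 2)) =
  bdry_term_dt l lt ltt f ft ftt l0 l0t f0 f0t a (- w ^ 2 - a ^ 2)
  + calib_residual l lt f ft l0 l0t f0 f0t a
  + / 2 * w ^ 2 * polar_dist2 l f l0 f0 - accel_dot l lt ltt f ft ftt l0 f0.
Proof.
  unfold bdry_term_dt, calib_residual, polar_dist2, accel_dot.
  assert (H1 := sin2_cos2 f). assert (H2 := sin2_cos2 f0). unfold Rsqr in *.
  replace (l0 ^ 2 * f0t ^ 2 + l0t ^ 2)
    with ((l0 ^ 2 * f0t ^ 2 + l0t ^ 2) * (sin f0 * sin f0 + cos f0 * cos f0))
    by (rewrite H2; ring).
  replace (l ^ 2 * ft ^ 2 + lt ^ 2)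
    with ((l ^ 2 * ft ^ 2 + lt ^ 2) * (sin f * sin f + cos f * cos f))
    by (rewrite H1; ring).
  field.
Qed.

Lemma accel_dot_geodesic (q dq : R -> R) (l lt ltt f ft ftt l0 f0 : R) : 0 < l ->
  ltt - l * ft ^ 2 = - l * q f -> ftt + 2 * (lt / l) * ft = - / 2 * dq f ->
  accel_dot l lt ltt f ft ftt l0 f0
  = Psi_defect q dq l f l0 f0 - (/ 2 * l0 ^ 2 * q f0 - / 2 * l ^ 2 * q f).
Proof.
  intros Hl H1 H2. unfold accel_dot, Psi_defect.
  replace ltt with (l * ft ^ 2 - l * q f) by lra.
  replace ftt with (- / 2 * dq f - 2 * (lt / l) * ft) by lra.
  field. lra.
Qed.

Lemma bdry_term_deriv (l lt ltt f ft ftt l0 l0t f0 f0t a at_ : R -> R) u :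
  derivable_pt_lim l u (lt u) -> derivable_pt_lim lt u (ltt u) ->
  derivable_pt_lim f u (ft u) -> derivable_pt_lim ft u (ftt u) ->
  derivable_pt_lim l0 u (l0t u) -> derivable_pt_lim f0 u (f0t u) ->
  derivable_pt_lim a u (at_ u) ->
  derivable_pt_lim (fun s => bdry_term (l s) (lt s) (f s) (ft s) (l0 s) (f0 s) (a s)) u
    (bdry_term_dt (l u) (lt u) (ltt u) (f u) (ft u) (ftt u) (l0 u) (l0t u)
       (f0 u) (f0t u) (a u) (at_ u)).
Proof.
  intros D1 D2 D3 D4 D5 D6 D7.
  apply is_derive_Reals in D1, D2, D3, D4, D5, D6, D7.
  apply is_derive_Reals. unfold bdry_term, bdry_term_dt.
  auto_derive.
  - repeat split; eexists; eauto.
  - assert (F1 : Derive (fun x => l x) u = lt u) by (apply is_derive_unique; exact D1).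
    assert (F2 : Derive (fun x => lt x) u = ltt u) by (apply is_derive_unique; exact D2).
    assert (F3 : Derive (fun x => f x) u = ft u) by (apply is_derive_unique; exact D3).
    assert (F4 : Derive (fun x => ft x) u = ftt u) by (apply is_derive_unique; exact D4).
    assert (F5 : Derive (fun x => l0 x) u = l0t u) by (apply is_derive_unique; exact D5).
    assert (F6 : Derive (fun x => f0 x) u = f0t u) by (apply is_derive_unique; exact D6).
    assert (F7 : Derive (fun x => a x) u = at_ u) by (apply is_derive_unique; exact D7).
    rewrite ?F1, ?F2, ?F3, ?F4, ?F5, ?F6, ?F7.
    field.
Qed.

(** * Analysis on [R] and [R^2] *)

Lemma pd_t_unique f g1 g2 : pd_t f g1 -> pd_t f g2 -> g1 = g2.
Proof.
  intros H1 H2. apply functional_extensionality; intro t.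
  apply functional_extensionality; intro x. eapply uniqueness_limite; eauto.
Qed.
Lemma pd_x_unique f g1 g2 : pd_x f g1 -> pd_x f g2 -> g1 = g2.
Proof.
  intros H1 H2. apply functional_extensionality; intro t.
  apply functional_extensionality; intro x. eapply uniqueness_limite; eauto.
Qed.
Lemma smooth2_cont f : smooth2 f -> cont2 f.
Proof. intros []; auto. Qed.
Lemma smooth2_pd_t f g : smooth2 f -> pd_t f g -> smooth2 g.
Proof. intros [ft fx _ H1 _ H3 _] H. rewrite (pd_t_unique _ _ _ H H1); auto. Qed.
Lemma smooth2_pd_x f g : smooth2 f -> pd_x f g -> smooth2 g.
Proof. intros [ft fx _ _ H2 _ H4] H. rewrite (pd_x_unique _ _ _ H H2); auto. Qed.
Lemma smooth2_ex_pd_t f : smooth2 f -> exists g, pd_t f g /\ smooth2 g.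
Proof. intros [ft fx _ H1 _ H3 _]. eauto. Qed.
Lemma smooth2_ex_pd_x f : smooth2 f -> exists g, pd_x f g /\ smooth2 g.
Proof. intros [ft fx _ _ H2 _ H4]. eauto. Qed.

Lemma cont2_continuity_2d_pt f : cont2 f -> forall t x, continuity_2d_pt f t x.
Proof.
  intros H t x eps. destruct (H t x eps (cond_pos eps)) as [d [Hd Hd2]].
  exists (mkposreal d Hd). intros u v Hu Hv. apply Hd2; auto.
Qed.

Lemma continuity_2d_pt_comp_param (p g : R -> R -> R) t x :
  (forall a b, continuity_2d_pt p a b) -> continuity_2d_pt g t x ->
  continuity_2d_pt (fun u v => p u (g u v)) t x.
Proof.
  intros Hp Hg eps.
  destruct (Hp t (g t x) eps) as [d1 Hd1].
  destruct (Hg d1) as [d2 Hd2].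
  exists (mkposreal _ (Rmin_pos _ _ (cond_pos d1) (cond_pos d2))). simpl.
  intros u v Hu Hv. apply Hd1.
  - pose proof (Rmin_l d1 d2). lra.
  - apply Hd2; pose proof (Rmin_r d1 d2); lra.
Qed.

Lemma continuity_2d_pt_locally_pos f t x : continuity_2d_pt f t x -> 0 < f t x ->
  locally_2d (fun u v => 0 < f u v) t x.
Proof.
  intros H Hp. destruct (H (mkposreal _ Hp)) as [d Hd].
  exists d. intros u v Hu Hv. specialize (Hd u v Hu Hv). simpl in Hd.
  apply Rabs_def2 in Hd. lra.
Qed.

Lemma continuity_2d_pt_slice_x f t x : continuity_2d_pt f t x -> continuous (fun v => f t v) x.
Proof.
  intros H. apply continuity_pt_filterlim.
  intros eps Heps. destruct (H (mkposreal _ Heps)) as [d Hd].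
  exists d. split; [apply cond_pos|]. intros v [_ Hv].
  apply (Hd t v); simpl; [rewrite Rminus_eq_0, Rabs_R0; apply cond_pos|]. exact Hv.
Qed.

Lemma continuity_2d_pt_slice_t f t x : continuity_2d_pt f t x -> continuous (fun u => f u x) t.
Proof.
  intros H. apply continuity_pt_filterlim.
  intros eps Heps. destruct (H (mkposreal _ Heps)) as [d Hd].
  exists d. split; [apply cond_pos|]. intros v [_ Hv].
  apply (Hd v x); simpl; [exact Hv|rewrite Rminus_eq_0, Rabs_R0; apply cond_pos].
Qed.

Lemma ex_RInt_continuous_R (f : R -> R) a b :
  (forall z, Rmin a b <= z <= Rmax a b -> continuous f z) -> ex_RInt f a b.
Proof. intros H. apply (@ex_RInt_continuous R_CompleteNormedModule). exact H. Qed.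

Lemma continuous_RInt_param (f : R -> R -> R) (a b t r : R) : a <= b -> 0 < r ->
  (forall u x, t - r <= u <= t + r -> a <= x <= b -> continuity_2d_pt f u x) ->
  continuous (fun u => RInt (fun x => f u x) a b) t.
Proof.
  intros Hab Hr Hc. apply continuity_pt_filterlim.
  intros eps Heps.
  assert (Hba : 0 < b - a + 1) by lra.
  set (e := mkposreal (eps / (b - a + 1)) (Rdiv_lt_0_compat _ _ Heps Hba)).
  destruct (uniform_continuity_2d f (t - r) (t + r) a b) with (eps := e) as [d Hd].
  { intros; apply Hc; auto. }
  exists (Rmin d r). split; [apply Rmin_pos; [apply cond_pos|lra]|].
  intros u [_ Hu]. change (dist R_met u t) with (Rabs (u - t)) in Hu.
  pose proof (Rmin_l d r). pose proof (Rmin_r d r).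
  assert (Hex : forall w, t - r <= w <= t + r -> ex_RInt (fun x => f w x) a b).
  { intros w Hw. apply ex_RInt_continuous_R. intros z Hz.
    rewrite Rmin_left, Rmax_right in Hz by lra. apply continuity_2d_pt_slice_x, Hc; auto. }
  assert (Hut : t - r <= u <= t + r) by (apply Rabs_def2 in Hu; lra).
  change (dist R_met (RInt (fun x : R => f u x) a b) (RInt (fun x : R => f t x) a b)) with
    (Rabs (minus (RInt (fun x : R => f u x) a b) (RInt (fun x : R => f t x) a b))).
  rewrite <- RInt_minus; [|apply Hex; auto|apply Hex; lra].
  eapply Rle_lt_trans.
  apply (abs_RInt_le_const _ a b (eps / (b - a + 1))); auto.
  - apply ex_RInt_minus; [apply Hex; auto|apply Hex; lra].
  - intros x Hx. apply Rlt_le. unfold minus, plus, opp; simpl.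
    apply (Hd t x u x); try lra; auto.
    rewrite Rminus_eq_0, Rabs_R0. apply cond_pos.
  - apply (Rmult_lt_reg_r (b - a + 1)); [lra|]. field_simplify; [|lra]. nra.
Qed.

Lemma RInt_nonneg_le0_zero (f : R -> R) a b : a < b ->
  (forall x, a <= x <= b -> continuous f x) ->
  (forall x, a <= x <= b -> 0 <= f x) -> RInt f a b <= 0 ->
  forall x, a <= x <= b -> f x = 0.
Proof.
  intros Hab Hc Hp Hi x0 Hx0.
  destruct (Rle_lt_or_eq_dec 0 (f x0) (Hp x0 Hx0)) as [Hpos|]; [|auto].
  exfalso.
  pose proof (Hc x0 Hx0) as Hcx. apply continuity_pt_filterlim in Hcx.
  destruct (Hcx (f x0 / 2) ltac:(lra)) as [d [Hd Hdd]].
  set (c := Rmax a (x0 - d / 2)). set (e := Rmin b (x0 + d / 2)).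
  assert (Hc1 : a <= c) by apply Rmax_l. assert (He1 : e <= b) by apply Rmin_l.
  assert (Hce : c < e).
  { unfold c, e. unfold Rmax, Rmin. destruct Rle_dec; destruct Rle_dec; lra. }
  assert (Hin : forall y, c <= y <= e -> Rabs (y - x0) < d).
  { intros y Hy. unfold c, e in Hy.
    pose proof (Rmax_r a (x0 - d / 2)). pose proof (Rmin_r b (x0 + d / 2)).
    apply Rabs_def1; lra. }
  assert (Hex : forall u v, a <= u -> u <= v -> v <= b -> ex_RInt f u v).
  { intros u v H1 H2 H3. apply ex_RInt_continuous_R. intros z Hz.
    rewrite Rmin_left, Rmax_right in Hz by lra.
    apply Hc; lra. }
  assert (I1 : 0 <= RInt f a c) by (apply RInt_ge_0; auto; [apply Hex; lra| intros; apply Hp; lra]).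
  assert (I3 : 0 <= RInt f e b) by (apply RInt_ge_0; auto; [apply Hex; lra| intros; apply Hp; lra]).
  assert (I2 : 0 < RInt f c e).
  { apply RInt_gt_0; auto.
    - intros y Hy. assert (Hy' := Hin y ltac:(lra)).
      destruct (Req_dec y x0) as [->|Hne]; [lra|].
      specialize (Hdd y). assert (Hdy : dist R_met y x0 < d) by (simpl; unfold R_dist; auto).
      assert (Dx : D_x no_cond x0 y) by (split; [exact I|auto]).
      specialize (Hdd (conj Dx Hdy)). simpl in Hdd; unfold R_dist in Hdd.
      apply Rabs_def2 in Hdd. lra.
    - intros y Hy. apply Hc; lra. }
  rewrite <- (RInt_Chasles f a c b) in Hi; [|apply Hex; lra|apply Hex; lra].
  rewrite <- (RInt_Chasles f c e b) in Hi; [|apply Hex; lra|apply Hex; lra].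
  unfold plus in Hi; simpl in Hi. lra.
Qed.

Lemma derivable_pt_lim_agree_on_interval (f g : R -> R) a b x l1 l2 : a < b -> a <= x <= b ->
  (forall y, a <= y <= b -> f y = g y) ->
  derivable_pt_lim f x l1 -> derivable_pt_lim g x l2 -> l1 = l2.
Proof.
  intros Hab Hx Heq H1 H2.
  assert (H := derivable_pt_lim_minus f g x l1 l2 H1 H2).
  destruct (Req_dec (l1 - l2) 0) as [E|E]; [lra|exfalso].
  assert (Hp : 0 < Rabs (l1 - l2) / 2) by (apply Rabs_pos_lt in E; lra).
  destruct (H _ Hp) as [d Hd].
  set (hh := if Rlt_dec x b then Rmin (d / 2) (b - x) else - Rmin (d / 2) (x - a)).
  assert (Hd2 : 0 < d / 2) by (pose proof (cond_pos d); lra).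
  assert (Hh : hh <> 0 /\ Rabs hh < d /\ a <= x + hh <= b).
  { unfold hh. destruct (Rlt_dec x b).
    - pose proof (Rmin_l (d/2) (b - x)). pose proof (Rmin_r (d/2) (b - x)).
      assert (0 < Rmin (d / 2) (b - x)) by (apply Rmin_pos; lra).
      rewrite Rabs_right by lra. repeat split; lra.
    - pose proof (Rmin_l (d/2) (x - a)). pose proof (Rmin_r (d/2) (x - a)).
      assert (0 < Rmin (d / 2) (x - a)) by (apply Rmin_pos; lra).
      rewrite Rabs_left by lra. repeat split; lra. }
  destruct Hh as [Hh0 [Hh1 Hh2]].
  specialize (Hd hh Hh0 Hh1). unfold minus_fct in Hd.
  rewrite (Heq (x + hh) Hh2), (Heq x Hx) in Hd.
  replace ((g (x + hh) - g (x + hh) - (g x - g x)) / hh - (l1 - l2)) with (- (l1 - l2)) in Hd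
    by (field; auto).
  rewrite Rabs_Ropp in Hd. lra.
Qed.

Lemma int_valued_no_step (f : R -> R) a b (k : Z) : a <= b -> continuity f ->
  (forall s, a <= s <= b -> exists k : Z, f s = IZR k) ->
  f a = IZR k -> IZR k < f b -> False.
Proof.
  intros Hab Hc Hi Ha Hb.
  destruct (Hi b ltac:(lra)) as [kb Ekb].
  assert (Hk1 : IZR k + 1 <= f b).
  { rewrite Ekb, <- plus_IZR. apply IZR_le. rewrite Ekb in Hb. apply lt_IZR in Hb. lia. }
  assert (Hab' : a < b) by (destruct (Req_dec a b); [subst; lra|lra]).
  destruct (IVT (fun s => f s - (IZR k + / 2)) a b) as [z [Hz Hfz]]; [| |lra|lra|].
  - apply continuity_minus; [exact Hc|]. apply continuity_const. intros u v; reflexivity.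
  - exact Hab'.
  - destruct (Hi z Hz) as [kz Hkz].
    assert (A1 : (k < kz)%Z) by (apply lt_IZR; lra).
    assert (A2 : (kz < k + 1)%Z) by (apply lt_IZR; rewrite plus_IZR; lra). lia.
Qed.

Lemma int_valued_continuous_const (f : R -> R) a b : a <= b -> continuity f ->
  (forall s, a <= s <= b -> exists k : Z, f s = IZR k) -> f b = f a.
Proof.
  intros Hab Hc Hi.
  destruct (Hi a ltac:(lra)) as [k Hk].
  destruct (Rtotal_order (f b) (f a)) as [Hlt|[Heq|Hgt]]; [exfalso| exact Heq |exfalso].
  - apply (int_valued_no_step (fun s => - f s) a b (- k)); auto.
    + apply continuity_opp, Hc.
    + intros s Hs. destruct (Hi s Hs) as [ks Hks]. exists (- ks)%Z.
      rewrite opp_IZR, Hks. reflexivity.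
    + rewrite opp_IZR, Hk. reflexivity.
    + rewrite opp_IZR. lra.
  - apply (int_valued_no_step f a b k); auto. lra.
Qed.

Lemma le_at_limit_PI_div (X Y D T : R) : 0 <= X -> 0 < T ->
  (forall w, 0 < w < PI / T -> / 2 * w ^ 2 * X - Y <= D) ->
  PI ^ 2 / (2 * T ^ 2) * X - Y <= D.
Proof.
  intros HX HT H.
  set (W := PI / T).
  assert (HW : 0 < W) by (unfold W; apply Rdiv_lt_0_compat; [apply PI_RGT_0|lra]).
  replace (PI ^ 2 / (2 * T ^ 2)) with (/ 2 * W ^ 2) by (unfold W; field; lra).
  apply Rnot_lt_le. intros Hgt.
  set (g := / 2 * W ^ 2 * X - Y - D).
  assert (Hg : 0 < g) by (unfold g; lra).
  assert (HWX : 0 <= W * X) by (apply Rmult_le_pos; lra).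
  set (d := Rmin (W / 2) (g / (W * X + 1))).
  assert (Hd0 : 0 < d) by (apply Rmin_pos; [|apply Rdiv_lt_0_compat]; lra).
  assert (Hd1 : d <= W / 2) by apply Rmin_l.
  assert (Hd2 : d * (W * X + 1) <= g).
  { assert (Hd : d <= g / (W * X + 1)) by apply Rmin_r.
    apply (Rmult_le_compat_r (W * X + 1)) in Hd; [|lra].
    replace (g / (W * X + 1) * (W * X + 1)) with g in Hd by (field; lra). exact Hd. }
  assert (Hw : 0 < W - d < W) by lra.
  specialize (H (W - d) Hw).
  assert (Hsq : / 2 * (W - d) ^ 2 * X = / 2 * W ^ 2 * X - d * (W * X) + / 2 * d ^ 2 * X)
    by field.
  pose proof (Rmult_le_pos _ _ (pow2_ge_0 d) HX).
  unfold g in *. lra.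
Qed.

Lemma pos_near_slice (f : R -> R -> R) c : (forall t x, continuity_2d_pt f t x) ->
  (forall x, 0 <= x <= 2 * PI -> 0 < f c x) ->
  exists d, 0 < d /\ forall v u, c - d <= v <= c + d -> 0 <= u <= 2 * PI -> 0 < f v u.
Proof.
  intros Hc Hp. assert (HPI := PI_RGT_0).
  destruct (continuity_ab_min (f c) 0 (2 * PI)) as [mx [Hmx1 Hmx2]]; [lra| |].
  { intros z Hz. apply continuity_pt_filterlim. apply continuity_2d_pt_slice_x, Hc. }
  assert (Hm : 0 < f c mx) by (apply Hp; auto).
  destruct (uniform_continuity_2d_1d' f 0 (2 * PI) c) with (eps := mkposreal _ Hm) as [d Hd].
  { intros; apply Hc. }
  exists d. split; [apply cond_pos|]. intros v u Hv Hu.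
  specialize (Hd u c u v Hu ltac:(pose proof (cond_pos d); lra) Hu Hv).
  rewrite Rminus_eq_0, Rabs_R0 in Hd. specialize (Hd (cond_pos d)).
  simpl in Hd. apply Rabs_def2 in Hd. specialize (Hmx1 u Hu). lra.
Qed.

Lemma pos_on_strip_nbhd (f : R -> R -> R) a b : a <= b -> (forall t x, continuity_2d_pt f t x) ->
  (forall t x, a <= t <= b -> 0 <= x <= 2 * PI -> 0 < f t x) ->
  exists e, 0 < e /\ forall y x, a - e < y < b + e -> 0 <= x <= 2 * PI -> 0 < f y x.
Proof.
  intros Hab Hc Hp.
  destruct (pos_near_slice f a Hc) as [da [Hda Ha]]; [intros; apply Hp; lra|].
  destruct (pos_near_slice f b Hc) as [db [Hdb Hb]]; [intros; apply Hp; lra|].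
  exists (Rmin da db). split; [apply Rmin_pos; auto|].
  intros y x Hy Hx. pose proof (Rmin_l da db). pose proof (Rmin_r da db).
  destruct (Rle_dec a y); destruct (Rle_dec y b).
  - apply Hp; auto.
  - apply Hb; auto; lra.
  - apply Ha; auto; lra.
  - lra.
Qed.

Lemma RInt_periodic_shift (f : R -> R) :
  (forall x, continuous f x) -> (forall x, f (x + 2 * PI) = f x) ->
  forall a, RInt f a (a + 2 * PI) = RInt f 0 (2 * PI).
Proof.
  intros Hc Hp a.
  assert (Hex : forall u v, ex_RInt f u v)
    by (intros; apply ex_RInt_continuous_R; intros; apply Hc).
  set (F := fun a => RInt f 0 (a + 2 * PI) - RInt f 0 a).
  assert (HF : forall a, RInt f a (a + 2 * PI) = F a).
  { intros b. unfold F. pose proof (RInt_Chasles f 0 b (b + 2 * PI) (Hex _ _) (Hex _ _)) as E.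
    change (RInt f 0 b + RInt f b (b + 2 * PI) = RInt f 0 (b + 2 * PI)) in E. lra. }
  assert (Hd0 : forall b, is_derive (RInt f 0) b (f b)).
  { intros b. apply is_derive_RInt with (a := 0).
    - apply filter_forall. intros c. apply RInt_correct, Hex.
    - apply Hc. }
  assert (HD : forall b, is_derive F b 0).
  { intros b.
    assert (H1 : is_derive (fun a => RInt f 0 (a + 2 * PI)) b (scal 1 (f (b + 2 * PI)))).
    { apply (is_derive_comp (RInt f 0) (fun a => a + 2 * PI)).
      + apply Hd0.
      + auto_derive; auto; ring. }
    pose proof (is_derive_minus _ _ _ _ _ H1 (Hd0 b)) as H2.
    replace 0 with (minus (scal 1 (f (b + 2 * PI))) (f b))
      by (rewrite Hp; unfold minus, scal, plus, opp; simpl; unfold mult; simpl; ring).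
    exact H2. }
  rewrite HF. replace (RInt f 0 (2 * PI)) with (F 0).
  2:{ unfold F. rewrite Rplus_0_l, RInt_point. unfold zero; simpl. ring. }
  destruct (MVT_gen F 0 a (fun _ => 0)) as [c [_ Hc2]].
  - intros; apply HD.
  - intros; apply derivable_continuous_pt. exists 0. apply is_derive_Reals, HD.
  - lra.
Qed.

Lemma RInt_circle_substitution (q g dg : R -> R) :
  (forall x, continuous q x) -> (forall x, q (x + 2 * PI) = q x) ->
  (forall x, 0 <= x <= 2 * PI -> derivable_pt_lim g x (dg x)) ->
  (forall x, 0 <= x <= 2 * PI -> continuous dg x) -> g (2 * PI) = g 0 + 2 * PI ->
  RInt (fun x => dg x * q (g x)) 0 (2 * PI) = RInt q 0 (2 * PI).
Proof.
  intros Hq Hp Hg Hdg Hper. assert (HPI := PI_RGT_0).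
  rewrite <- (RInt_periodic_shift q Hq Hp (g 0)), <- Hper.
  apply is_RInt_unique.
  apply (is_RInt_comp q g dg 0 (2 * PI)).
  - intros; apply Hq.
  - intros x Hx. rewrite Rmin_left, Rmax_right in Hx by lra. split.
    + apply is_derive_Reals, Hg; auto.
    + apply Hdg; auto.
Qed.

Lemma is_RInt_plusR (f g : R -> R) a b lf lg : is_RInt f a b lf -> is_RInt g a b lg ->
  is_RInt (fun x => f x + g x) a b (lf + lg).
Proof. intros H1 H2. exact (is_RInt_plus f g a b lf lg H1 H2). Qed.
Lemma is_RInt_minusR (f g : R -> R) a b lf lg : is_RInt f a b lf -> is_RInt g a b lg ->
  is_RInt (fun x => f x - g x) a b (lf - lg).
Proof. intros H1 H2. exact (is_RInt_minus f g a b lf lg H1 H2). Qed.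
Lemma is_RInt_scalR (f : R -> R) c a b lf : is_RInt f a b lf ->
  is_RInt (fun x => c * f x) a b (c * lf).
Proof. intros H1. exact (is_RInt_scal f a b c lf H1). Qed.

Lemma is_RInt_of_Riemann (f : R -> R) a b v : Defs.is_RInt f a b v -> is_RInt f a b v.
Proof.
  intros [pr Hpr].
  assert (E : RInt f a b = v) by (rewrite <- Hpr; apply RInt_Reals).
  rewrite <- E. exact (@RInt_correct R_CompleteNormedModule f a b (ex_RInt_Reals_1 f a b pr)).
Qed.

Lemma smooth2_continuity f : smooth2 f -> forall t x, continuity_2d_pt f t x.
Proof. intros Hf. apply cont2_continuity_2d_pt, smooth2_cont, Hf. Qed.

Lemma continuity_2d_pt_of_fst (f : R -> R) t x : continuity_pt f t ->
  continuity_2d_pt (fun u v => f u) t x.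
Proof.
  intros H eps. destruct (H eps (cond_pos eps)) as [d [Hd Hd2]].
  exists (mkposreal d Hd). intros u v Hu _. simpl in Hu.
  destruct (Req_dec u t) as [->|Hne]; [rewrite Rminus_eq_0, Rabs_R0; apply cond_pos|].
  apply (Hd2 u). split; [split; [exact I|auto]|exact Hu].
Qed.

Lemma continuity_2d_pt_div (f g : R -> R -> R) t x :
  continuity_2d_pt f t x -> continuity_2d_pt g t x -> g t x <> 0 ->
  continuity_2d_pt (fun u v => f u v / g u v) t x.
Proof.
  intros H1 H2 H3. unfold Rdiv. apply continuity_2d_pt_mult; auto.
  apply continuity_2d_pt_inv; auto.
Qed.

Lemma continuity_2d_pt_lam (f : R -> R -> R) t x : continuity_2d_pt f t x -> 0 < f t x ->
  continuity_2d_pt (lam f) t x.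
Proof.
  intros H Hp. apply (continuity_1d_2d_pt_comp sqrt f); auto.
  apply continuity_pt_sqrt. lra.
Qed.

Lemma lam_pd_t_form (f ft lt : R -> R -> R) u v : pd_t f ft -> pd_t (lam f) lt ->
  0 < f u v -> lt u v = ft u v / (2 * lam f u v).
Proof.
  intros D1 D2 Hp. apply (uniqueness_limite (fun s => lam f s v) u); [apply D2|].
  apply is_derive_Reals. unfold lam.
  assert (H1 := D1 u v). apply is_derive_Reals in H1.
  auto_derive.
  - split; [eexists; exact H1|split; [exact Hp|auto]].
  - rewrite (is_derive_unique _ _ _ H1). field.
    apply Rgt_not_eq, sqrt_lt_R0, Hp.
Qed.

Lemma derivative_periodic (f df : R -> R) : (forall x, f (x + 2 * PI) = f x) ->
  (forall x, derivable_pt_lim f x (df x)) -> forall x, df (x + 2 * PI) = df x.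
Proof.
  intros Hp Hd x.
  apply (uniqueness_limite f x); [|apply Hd].
  apply (derivable_pt_lim_ext (fun y => f (y + 2 * PI))); [intros; apply Hp|].
  apply is_derive_Reals.
  replace (df (x + 2 * PI)) with (scal 1 (df (x + 2 * PI)))
    by (unfold scal; simpl; unfold mult; simpl; ring).
  apply (is_derive_comp f (fun y => y + 2 * PI));
    [apply is_derive_Reals, Hd|auto_derive; auto; ring].
Qed.

Lemma locally_of_Rabs (P : R -> Prop) t r : 0 < r ->
  (forall y, Rabs (y - t) < r -> P y) -> locally t P.
Proof. intros Hr H. exists (mkposreal r Hr). intros y Hy. apply H, Hy. Qed.

(** * The comparison argument *)

Section Comparison.
Variables (t0 t1 : R) (phi phit phitt phix lamt lamtt p px : R -> R -> R).
Hypotheses (Ht : t0 < t1)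
  (Hphi_smooth : smooth2 phi) (Hphi_lift : circle_lift phi)
  (Hphit : pd_t phi phit) (Hphitt : pd_t phit phitt) (Hphix : pd_x phi phix)
  (Hphix_pos : forall t x, t0 <= t <= t1 -> 0 < phix t x)
  (Hlamt : pd_t (lam phix) lamt) (Hlamtt : pd_t lamt lamtt)
  (Hp_smooth : smooth2 p) (Hp_per : periodic_x p) (Hpx : pd_x p px)
  (Heq1 : forall t x, t0 <= t <= t1 ->
     phitt t x + 2 * (lamt t x / lam phix t x) * phit t x = - / 2 * px t (phi t x))
  (Heq2 : forall t x, t0 <= t <= t1 ->
     lamtt t x - lam phix t x * phit t x ^ 2 = - lam phix t x * p t (phi t x))
  (Hhess : forall t x r w1 w2 h, t0 <= t <= t1 -> 0 < r -> (w1 <> 0 \/ w2 <> 0) ->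
     hess_form (p t) x r w1 w2 h -> (t1 - t0) ^ 2 * Rabs h < PI ^ 2 * (w1 ^ 2 + w2 ^ 2)).
Variables (phi0 phi0t phi0x lam0t : R -> R -> R).
Hypotheses (Hphi0_smooth : smooth2 phi0) (Hphi0_lift : circle_lift phi0)
  (Hphi0t : pd_t phi0 phi0t) (Hphi0x : pd_x phi0 phi0x)
  (Hphi0x_pos : forall t x, t0 <= t <= t1 -> 0 < phi0x t x)
  (Hlam0t : pd_t (lam phi0x) lam0t)
  (Hend0 : exists k : Z, forall x, phi0 t0 x = phi t0 x + 2 * IZR k * PI)
  (Hend1 : exists k : Z, forall x, phi0 t1 x = phi t1 x + 2 * IZR k * PI).
Variables (phixt phixtt phi0xt pxx : R -> R -> R).
Hypotheses (Hphixt : pd_t phix phixt) (Hphixtt : pd_t phixt phixtt)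
  (Hphixtt_smooth : smooth2 phixtt) (Hphi0xt : pd_t phi0x phi0xt)
  (Hphi0xt_smooth : smooth2 phi0xt) (Hpxx : pd_x px pxx).

Let T := t1 - t0.
Let HPI := PI_RGT_0.
Let lm := lam phix.
Let lm0 := lam phi0x.

Ltac smooth := solve [eauto 6 using smooth2_pd_t, smooth2_pd_x].

Lemma lamtt_form u v : 0 < phix u v ->
  lamtt u v = phixtt u v / (2 * lm u v) - phixt u v ^ 2 / (4 * lm u v ^ 3).
Proof.
  intros Hp. apply (uniqueness_limite (fun s => lamt s v) u); [apply Hlamtt|].
  apply is_derive_Reals.
  apply (is_derive_ext_loc (fun s => phixt s v / (2 * sqrt (phix s v)))).
  - assert (Hc := smooth2_continuity phix ltac:(smooth) u v).
    apply continuity_2d_pt_slice_t, continuity_pt_filterlim in Hc.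
    destruct (Hc (phix u v) Hp) as [d [Hd Hd2]].
    exists (mkposreal d Hd). intros s Hs.
    rewrite (lam_pd_t_form phix phixt lamt); [reflexivity|auto|auto|].
    destruct (Req_dec s u) as [->|Hne]; [exact Hp|].
    assert (Hdd : D_x no_cond u s) by (split; [exact I|auto]).
    specialize (Hd2 s (conj Hdd Hs)). simpl in Hd2. unfold R_dist in Hd2.
    apply Rabs_def2 in Hd2. lra.
  - assert (H1 := Hphixtt u v). apply is_derive_Reals in H1.
    assert (H2 := Hphixt u v). apply is_derive_Reals in H2.
    auto_derive.
    + repeat split; try (eexists; eassumption); auto.
      apply Rgt_not_eq, Rlt_gt, Rmult_lt_0_compat; [lra|apply sqrt_lt_R0, Hp].
    + rewrite (is_derive_unique _ _ _ H1), (is_derive_unique _ _ _ H2). unfold lm, lam.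
      assert (Hs := sqrt_lt_R0 _ Hp). assert (Hss := sqrt_sqrt (phix u v) (Rlt_le _ _ Hp)).
      set (sq := sqrt (phix u v)) in *. field. lra.
Qed.

Lemma smooth_phit : smooth2 phit.
Proof. smooth. Qed.
Lemma smooth_phitt : smooth2 phitt.
Proof. smooth. Qed.
Lemma smooth_phi0t : smooth2 phi0t.
Proof. smooth. Qed.
Lemma smooth_px : smooth2 px.
Proof. smooth. Qed.

Lemma cont_lam t x : 0 < phix t x -> continuity_2d_pt lm t x.
Proof. intros H. apply continuity_2d_pt_lam; auto. apply smooth2_continuity; smooth. Qed.

Lemma cont_lam0 t x : 0 < phi0x t x -> continuity_2d_pt lm0 t x.
Proof. intros H. apply continuity_2d_pt_lam; auto. apply smooth2_continuity; smooth. Qed.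

Lemma cont_lamt t x : 0 < phix t x -> continuity_2d_pt lamt t x.
Proof.
  intros H. apply (continuity_2d_pt_ext_loc (fun u v => phixt u v / (2 * lm u v))).
  - destruct (continuity_2d_pt_locally_pos phix t x) as [d Hd];
      [apply smooth2_continuity; smooth|exact H|].
    exists d. intros u v Hu Hv. rewrite (lam_pd_t_form phix phixt lamt); auto.
  - assert (0 < lm t x) by (apply sqrt_lt_R0, H).
    apply continuity_2d_pt_div; [apply smooth2_continuity; smooth| |lra].
    apply continuity_2d_pt_mult; [apply continuity_2d_pt_const|apply cont_lam, H].
Qed.

Lemma cont_lam0t t x : 0 < phi0x t x -> continuity_2d_pt lam0t t x.
Proof.
  intros H. apply (continuity_2d_pt_ext_loc (fun u v => phi0xt u v / (2 * lm0 u v))).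
  - destruct (continuity_2d_pt_locally_pos phi0x t x) as [d Hd];
      [apply smooth2_continuity; smooth|exact H|].
    exists d. intros u v Hu Hv. rewrite (lam_pd_t_form phi0x phi0xt lam0t); auto.
  - assert (0 < lm0 t x) by (apply sqrt_lt_R0, H).
    apply continuity_2d_pt_div; [apply smooth2_continuity; smooth| |lra].
    apply continuity_2d_pt_mult; [apply continuity_2d_pt_const|apply cont_lam0, H].
Qed.

Lemma cont_lamtt t x : 0 < phix t x -> continuity_2d_pt lamtt t x.
Proof.
  intros H. apply (continuity_2d_pt_ext_loc
     (fun u v => phixtt u v / (2 * lm u v) - phixt u v ^ 2 / (4 * lm u v ^ 3))).
  - destruct (continuity_2d_pt_locally_pos phix t x) as [d Hd];
      [apply smooth2_continuity; smooth|exact H|].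
    exists d. intros u v Hu Hv. rewrite lamtt_form; auto.
  - assert (Hl : 0 < lm t x) by (apply sqrt_lt_R0, H).
    assert (Hlc := cont_lam t x H).
    apply continuity_2d_pt_minus; apply continuity_2d_pt_div.
    + apply smooth2_continuity; smooth.
    + apply continuity_2d_pt_mult; [apply continuity_2d_pt_const|exact Hlc].
    + apply Rgt_not_eq, Rlt_gt, Rmult_lt_0_compat; lra.
    + apply (continuity_1d_2d_pt_comp (fun y => y ^ 2));
        [apply derivable_continuous_pt, derivable_pow|apply smooth2_continuity; smooth].
    + apply continuity_2d_pt_mult; [apply continuity_2d_pt_const|].
      apply (continuity_1d_2d_pt_comp (fun y => y ^ 3));
        [apply derivable_continuous_pt, derivable_pow|exact Hlc].
    + apply Rgt_not_eq, Rlt_gt, Rmult_lt_0_compat; [lra|apply pow_lt; lra].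
Qed.

(* [jacobi_a w] solves the Riccati equation [a' = - w^2 - a^2]; for [w T < PI] the
   phase keeps the argument of the cotangent inside (0, PI) near [t0, t1]. *)
Definition jacobi_phase (w : R) : R := (PI - w * T) / 2.
Definition jacobi_arg (w t : R) : R := w * (t - t0) + jacobi_phase w.
Definition jacobi_a (w t : R) : R := w * cos (jacobi_arg w t) / sin (jacobi_arg w t).

Definition bdry w t x := bdry_term (lm t x) (lamt t x) (phi t x) (phit t x)
  (lm0 t x) (phi0 t x) (jacobi_a w t).
Definition bdry_dt w t x := bdry_term_dt (lm t x) (lamt t x) (lamtt t x) (phi t x)
  (phit t x) (phitt t x) (lm0 t x) (lam0t t x) (phi0 t x) (phi0t t x)
  (jacobi_a w t) (- w ^ 2 - jacobi_a w t ^ 2).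
Definition resid w t x := calib_residual (lm t x) (lamt t x) (phi t x) (phit t x)
  (lm0 t x) (lam0t t x) (phi0 t x) (phi0t t x) (jacobi_a w t).
Definition dist2 t x := polar_dist2 (lm t x) (phi t x) (lm0 t x) (phi0 t x).
Definition defect t x := Psi_defect (p t) (px t) (lm t x) (phi t x) (lm0 t x) (phi0 t x).
Definition pot t x := lm t x ^ 2 * p t (phi t x).
Definition pot0 t x := lm0 t x ^ 2 * p t (phi0 t x).
Definition en t x := lm t x ^ 2 * phit t x ^ 2 + lamt t x ^ 2.
Definition en0 t x := lm0 t x ^ 2 * phi0t t x ^ 2 + lam0t t x ^ 2.

Definition regular t x := 0 < phix t x /\ 0 < phi0x t x.
Definition jacobi_ok w t := sin (jacobi_arg w t) <> 0.

Lemma jacobi_a_deriv w t : jacobi_ok w t ->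
  derivable_pt_lim (jacobi_a w) t (- w ^ 2 - jacobi_a w t ^ 2).
Proof.
  intros Hs. apply is_derive_Reals. unfold jacobi_ok, jacobi_a, jacobi_arg in *.
  auto_derive; [auto|].
  assert (H := sin2_cos2 (w * (t - t0) + jacobi_phase w)). unfold Rsqr in H.
  replace (t + - t0) with (t - t0) by ring. field. auto.
Qed.

Ltac c2dm := repeat (first [ assumption
  | apply continuity_2d_pt_of_fst, derivable_continuous_pt;
    eexists; apply jacobi_a_deriv; assumption
  | apply cont_lam; assumption | apply cont_lam0; assumption
  | apply cont_lamt; assumption | apply cont_lamtt; assumption
  | apply cont_lam0t; assumption
  | apply (smooth2_continuity phi Hphi_smooth)
  | apply (smooth2_continuity phit smooth_phit)
  | apply (smooth2_continuity phitt smooth_phitt)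
  | apply (smooth2_continuity phi0 Hphi0_smooth)
  | apply (smooth2_continuity phi0t smooth_phi0t)
  | apply (continuity_2d_pt_comp_param p); [apply smooth2_continuity, Hp_smooth|]
  | apply (continuity_2d_pt_comp_param px); [apply smooth2_continuity, smooth_px|]
  | apply (continuity_1d_2d_pt_comp cos); [apply continuity_cos|]
  | apply (continuity_1d_2d_pt_comp sin); [apply continuity_sin|]
  | apply (continuity_1d_2d_pt_comp (fun y => y ^ 2));
    [apply derivable_continuous_pt, derivable_pow|]
  | apply continuity_2d_pt_plus | apply continuity_2d_pt_minus
  | apply continuity_2d_pt_mult | apply continuity_2d_pt_opp
  | apply continuity_2d_pt_const ]).

Lemma cont_dist2 t x : regular t x -> continuity_2d_pt dist2 t x.
Proof. intros [H1 H2]. unfold dist2, polar_dist2. c2dm. Qed.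
Lemma cont_defect t x : regular t x -> continuity_2d_pt defect t x.
Proof. intros [H1 H2]. unfold defect, Psi_defect. c2dm. Qed.
Lemma cont_bdry w t x : regular t x -> jacobi_ok w t -> continuity_2d_pt (bdry w) t x.
Proof. intros [H1 H2] H3. unfold bdry, bdry_term. c2dm. Qed.
Lemma cont_bdry_dt w t x : regular t x -> jacobi_ok w t -> continuity_2d_pt (bdry_dt w) t x.
Proof. intros [H1 H2] H3. unfold bdry_dt, bdry_term_dt. c2dm. Qed.
Lemma cont_resid w t x : regular t x -> jacobi_ok w t -> continuity_2d_pt (resid w) t x.
Proof. intros [H1 H2] H3. unfold resid, calib_residual. c2dm. Qed.
Lemma cont_en t x : regular t x -> continuity_2d_pt en t x.
Proof. intros [H1 H2]. unfold en. c2dm. Qed.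
Lemma cont_en0 t x : regular t x -> continuity_2d_pt en0 t x.
Proof. intros [H1 H2]. unfold en0. c2dm. Qed.
Lemma cont_pot t x : regular t x -> continuity_2d_pt pot t x.
Proof. intros [H1 H2]. unfold pot. c2dm. Qed.
Lemma cont_pot0 t x : regular t x -> continuity_2d_pt pot0 t x.
Proof. intros [H1 H2]. unfold pot0. c2dm. Qed.

Lemma regular_in t x : t0 <= t <= t1 -> regular t x.
Proof. intros H. split; [apply Hphix_pos|apply Hphi0x_pos]; auto. Qed.

Lemma regular_nbhd : exists e, 0 < e /\
  forall y x, t0 - e < y < t1 + e -> 0 <= x <= 2 * PI -> regular y x.
Proof.
  destruct (pos_on_strip_nbhd phix t0 t1) as [e1 [He1 H1]];
    [lra|apply smooth2_continuity; smooth|intros; apply Hphix_pos; auto|].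
  destruct (pos_on_strip_nbhd phi0x t0 t1) as [e2 [He2 H2]];
    [lra|apply smooth2_continuity; smooth|intros; apply Hphi0x_pos; auto|].
  exists (Rmin e1 e2). split; [apply Rmin_pos; auto|].
  intros y x Hy Hx. pose proof (Rmin_l e1 e2). pose proof (Rmin_r e1 e2).
  split; [apply H1|apply H2]; auto; lra.
Qed.

Lemma jacobi_ok_nbhd w : 0 < w < PI / T ->
  exists e, 0 < e /\ forall y, t0 - e < y < t1 + e -> jacobi_ok w y.
Proof.
  intros Hw.
  assert (HwT : w * T < PI).
  { destruct Hw as [_ Hw']. apply (Rmult_lt_compat_r T) in Hw'; [|unfold T; lra].
    unfold Rdiv in Hw'. rewrite Rmult_assoc, Rinv_l in Hw' by (unfold T; lra). lra. }
  assert (Hd : 0 < jacobi_phase w) by (unfold jacobi_phase; lra).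
  exists (jacobi_phase w / w). split; [apply Rdiv_lt_0_compat; lra|].
  intros y Hy. apply Rgt_not_eq, Rlt_gt, sin_gt_0; unfold jacobi_arg.
  - assert (- (jacobi_phase w / w) < y - t0) by lra.
    apply (Rmult_lt_compat_l w) in H; [|lra].
    replace (w * - (jacobi_phase w / w)) with (- jacobi_phase w) in H by (field; lra). lra.
  - assert (y - t0 < T + jacobi_phase w / w) by (unfold T; lra).
    apply (Rmult_lt_compat_l w) in H; [|lra].
    replace (w * (T + jacobi_phase w / w)) with (w * T + jacobi_phase w) in H
      by (field; lra).
    unfold jacobi_phase in *. lra.
Qed.

Lemma continuous_RInt_regular (F : R -> R -> R) t : t0 <= t <= t1 ->
  (forall u x, regular u x -> continuity_2d_pt F u x) ->
  continuous (fun y => RInt (F y) 0 (2 * PI)) t.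
Proof.
  intros Ht' HF. destruct regular_nbhd as [r [Hr Hreg]].
  apply (continuous_RInt_param _ 0 (2 * PI) t (r / 2)); [lra|lra|].
  intros u x Hu Hx. apply HF, Hreg; auto; lra.
Qed.

Lemma ex_RInt_slice (F : R -> R -> R) t :
  (forall x, 0 <= x <= 2 * PI -> continuity_2d_pt F t x) -> ex_RInt (F t) 0 (2 * PI).
Proof.
  intros H. apply ex_RInt_continuous_R. intros z Hz.
  rewrite Rmin_left, Rmax_right in Hz by lra.
  apply continuity_2d_pt_slice_x, H, Hz.
Qed.

Lemma ex_RInt_t0_t1 (f : R -> R) : (forall t, t0 <= t <= t1 -> continuous f t) ->
  ex_RInt f t0 t1.
Proof.
  intros H. apply ex_RInt_continuous_R. intros z Hz.
  rewrite Rmin_left, Rmax_right in Hz by lra. auto.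
Qed.

Lemma energy_RInt (ft fx lt : R -> R -> R) E : energy ft fx lt t0 t1 E ->
  exists I, (forall t, t0 <= t <= t1 ->
     I t = RInt (fun x => lam fx t x ^ 2 * ft t x ^ 2 + lt t x ^ 2) 0 (2 * PI))
  /\ is_RInt I t0 t1 E.
Proof.
  intros [I [H1 H2]]. exists I. split.
  - intros t Ht'. symmetry. apply is_RInt_unique, is_RInt_of_Riemann, H1, Ht'.
  - apply is_RInt_of_Riemann, H2.
Qed.

(* [lm^2 = phix], so [pot] is [p(phi) phi_x]: both potentials integrate to [int p]. *)
Lemma RInt_pot_eq t : t0 <= t <= t1 -> RInt (pot t) 0 (2 * PI) = RInt (pot0 t) 0 (2 * PI).
Proof.
  intros Ht'.
  assert (Hq : forall x, continuous (p t) x)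
    by (intros; apply continuity_2d_pt_slice_x, smooth2_continuity, Hp_smooth).
  assert (Ep : phi t (2 * PI) = phi t 0 + 2 * PI)
    by (rewrite <- Hphi_lift; f_equal; ring).
  assert (Ep0 : phi0 t (2 * PI) = phi0 t 0 + 2 * PI)
    by (rewrite <- Hphi0_lift; f_equal; ring).
  transitivity (RInt (p t) 0 (2 * PI)); [|symmetry].
  - rewrite <- (RInt_circle_substitution (p t) (phi t) (phix t) Hq (Hp_per t)
      (fun x _ => Hphix t x)
      (fun x _ => continuity_2d_pt_slice_x _ _ _ (smooth2_continuity phix ltac:(smooth) t x))
      Ep).
    apply RInt_ext. intros x _. unfold pot, lm, lam. rewrite pow2_sqrt; auto.
    apply Rlt_le, Hphix_pos, Ht'.
  - rewrite <- (RInt_circle_substitution (p t) (phi0 t) (phi0x t) Hq (Hp_per t)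
      (fun x _ => Hphi0x t x)
      (fun x _ => continuity_2d_pt_slice_x _ _ _ (smooth2_continuity phi0x ltac:(smooth) t x))
      Ep0).
    apply RInt_ext. intros x _. unfold pot0, lm0, lam. rewrite pow2_sqrt; auto.
    apply Rlt_le, Hphi0x_pos, Ht'.
Qed.

Lemma phi0x_eq_of_shift t c : (forall y, phi0 t y = phi t y + c) ->
  forall x, phi0x t x = phix t x.
Proof.
  intros Hc x. apply (uniqueness_limite (phi0 t) x); [apply Hphi0x|].
  apply (derivable_pt_lim_ext (fun y => phi t y + c)); [intros; symmetry; apply Hc|].
  replace (phix t x) with (phix t x + 0) by ring.
  apply derivable_pt_lim_plus; [apply Hphix|apply derivable_pt_lim_const].
Qed.

Lemma lm_pos t x : t0 <= t <= t1 -> 0 < lm t x.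
Proof. intros H. apply sqrt_lt_R0, Hphix_pos, H. Qed.

Lemma lm0_pos t x : t0 <= t <= t1 -> 0 < lm0 t x.
Proof. intros H. apply sqrt_lt_R0, Hphi0x_pos, H. Qed.

Lemma defect_lt t x : t0 <= t <= t1 -> dist2 t x <> 0 ->
  defect t x < PI ^ 2 / (2 * T ^ 2) * dist2 t x.
Proof.
  intros Ht' HH. unfold defect, dist2 in *.
  apply (Psi_defect_lt (p t) (px t) (pxx t) T).
  - unfold T; lra.
  - apply Hp_per.
  - apply (derivative_periodic (p t)); [apply Hp_per|apply Hpx].
  - apply Hpx.
  - apply Hpxx.
  - intros y r w1 w2 h. apply Hhess, Ht'.
  - apply lm_pos, Ht'.
  - apply lm0_pos, Ht'.
  - exact HH.
Qed.

Lemma defect_eq0 t x : t0 <= t <= t1 -> dist2 t x = 0 -> defect t x = 0.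
Proof.
  intros Ht' HH. unfold defect, dist2 in *.
  apply Psi_defect_eq0; [apply Hp_per|apply lm_pos, Ht'|apply lm0_pos, Ht'|exact HH].
Qed.

Lemma ends_agree s : (exists k : Z, forall x, phi0 s x = phi s x + 2 * IZR k * PI) ->
  forall x, lm0 s x = lm s x /\ cos (phi0 s x) = cos (phi s x)
            /\ sin (phi0 s x) = sin (phi s x).
Proof.
  intros [k Hk] x. unfold lm0, lm, lam.
  rewrite (phi0x_eq_of_shift s _ Hk), Hk. split; [reflexivity|split].
  - apply (periodic_2PI_Z cos cos_add_2PI).
  - apply (periodic_2PI_Z sin sin_add_2PI).
Qed.

Lemma energy_density_split w t x : t0 <= t <= t1 ->
  / 2 * (en0 t x - en t x) =
  bdry_dt w t x + resid w t x + / 2 * w ^ 2 * dist2 t x - defect t x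
  + (/ 2 * pot0 t x - / 2 * pot t x).
Proof.
  intros Ht'. unfold en0, en, bdry_dt, resid, dist2, defect, pot0, pot.
  rewrite (energy_density_calibration (lm t x) (lamt t x) (lamtt t x) (phi t x) (phit t x)
    (phitt t x) (lm0 t x) (lam0t t x) (phi0 t x) (phi0t t x) (jacobi_a w t) w).
  rewrite (accel_dot_geodesic (p t) (px t)); [ring|apply lm_pos, Ht'|apply Heq2, Ht'|].
  apply Heq1, Ht'.
Qed.

Section FixedFrequency.
Variable w : R.
Hypothesis Hw : 0 < w < PI / T.

Lemma jacobi_region : exists r, 0 < r /\ forall y x, t0 - r < y < t1 + r ->
  0 <= x <= 2 * PI -> regular y x /\ jacobi_ok w y.
Proof.
  destruct regular_nbhd as [e [He H]].
  destruct (jacobi_ok_nbhd w Hw) as [e' [He' H']].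
  exists (Rmin e e'). split; [apply Rmin_pos; auto|].
  intros y x Hy Hx. pose proof (Rmin_l e e'). pose proof (Rmin_r e e').
  split; [apply H; auto; lra|apply H'; lra].
Qed.

Lemma bdry_deriv u v : jacobi_ok w u ->
  derivable_pt_lim (fun z => bdry w z v) u (bdry_dt w u v).
Proof.
  intros Hs. unfold bdry, bdry_dt.
  apply (bdry_term_deriv (fun s => lm s v) (fun s => lamt s v) (fun s => lamtt s v)
     (fun s => phi s v) (fun s => phit s v) (fun s => phitt s v) (fun s => lm0 s v)
     (fun s => lam0t s v) (fun s => phi0 s v) (fun s => phi0t s v) (jacobi_a w)
     (fun s => - w ^ 2 - jacobi_a w s ^ 2));
    [apply Hlamt|apply Hlamtt|apply Hphit|apply Hphitt|apply Hlam0t|apply Hphi0t|].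
  apply jacobi_a_deriv, Hs.
Qed.

Lemma RInt_bdry_deriv t : t0 <= t <= t1 ->
  is_derive (fun y => RInt (bdry w y) 0 (2 * PI)) t (RInt (bdry_dt w t) 0 (2 * PI)).
Proof.
  intros Ht'. destruct jacobi_region as [r [Hr Hreg]].
  assert (Hok : forall y, Rabs (y - t) < r -> jacobi_ok w y).
  { intros y Hy. apply Rabs_def2 in Hy. apply (Hreg y 0); lra. }
  replace (RInt (bdry_dt w t) 0 (2 * PI))
    with (RInt (fun s => Derive (fun u => bdry w u s) t) 0 (2 * PI)).
  2:{ apply RInt_ext. intros s _.
      apply is_derive_unique, is_derive_Reals, bdry_deriv, Hok. rewrite Rminus_eq_0, Rabs_R0.
      exact Hr. }
  apply (is_derive_RInt_param (fun y x => bdry w y x)).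
  - apply (locally_of_Rabs _ t r Hr). intros y Hy s Hs.
    exists (bdry_dt w y s). apply is_derive_Reals, bdry_deriv, Hok, Hy.
  - intros s Hs. rewrite Rmin_left, Rmax_right in Hs by lra.
    apply (continuity_2d_pt_ext_loc (bdry_dt w)).
    + exists (mkposreal r Hr). intros u v Hu _.
      symmetry. apply is_derive_unique, is_derive_Reals, bdry_deriv, Hok, Hu.
    + apply cont_bdry_dt; [apply regular_in|apply (Hreg t s)]; auto; lra.
  - apply (locally_of_Rabs _ t r Hr). intros y Hy.
    apply ex_RInt_slice. intros z Hz. apply Rabs_def2 in Hy.
    apply cont_bdry; apply (Hreg y z); auto; lra.
Qed.

Lemma RInt_bdry_end s : (exists k : Z, forall x, phi0 s x = phi s x + 2 * IZR k * PI) ->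
  RInt (bdry w s) 0 (2 * PI) = 0.
Proof.
  intros Hk. transitivity (RInt (fun _ : R => 0) 0 (2 * PI)).
  - apply RInt_ext. intros x _. destruct (ends_agree s Hk x) as [E1 [E2 E3]].
    unfold bdry, bdry_term. rewrite E1, E2, E3.
    match goal with |- ?a = ?b => change (@eq R a b) end. ring.
  - rewrite RInt_const. unfold scal; simpl; unfold mult; simpl. ring.
Qed.

Lemma RInt_RInt_bdry_dt : is_RInt (fun t => RInt (bdry_dt w t) 0 (2 * PI)) t0 t1 0.
Proof.
  assert (H : is_RInt (fun t => RInt (bdry_dt w t) 0 (2 * PI)) t0 t1
                (minus (RInt (bdry w t1) 0 (2 * PI)) (RInt (bdry w t0) 0 (2 * PI)))).
  { apply (is_RInt_derive (fun y => RInt (bdry w y) 0 (2 * PI))); intros x Hx;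
      rewrite Rmin_left, Rmax_right in Hx by lra.
    - apply RInt_bdry_deriv, Hx.
    - destruct jacobi_region as [r [Hr Hreg]].
      apply (continuous_RInt_param _ 0 (2 * PI) x (r / 2)); [lra|lra|].
      intros u y Hu Hy. apply cont_bdry_dt; apply (Hreg u y); auto; lra. }
  rewrite (RInt_bdry_end t1 Hend1), (RInt_bdry_end t0 Hend0) in H.
  match type of H with is_RInt _ _ _ ?v => replace v with 0 in H end; [exact H|].
  unfold minus, plus, opp; simpl; ring.
Qed.

Lemma RInt_energy_split t : t0 <= t <= t1 ->
  / 2 * (RInt (en0 t) 0 (2 * PI) - RInt (en t) 0 (2 * PI)) =
  RInt (bdry_dt w t) 0 (2 * PI) + RInt (resid w t) 0 (2 * PI)
  + / 2 * w ^ 2 * RInt (dist2 t) 0 (2 * PI) - RInt (defect t) 0 (2 * PI).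
Proof.
  intros Ht'. destruct jacobi_region as [r [Hr Hreg]].
  assert (Hok : jacobi_ok w t) by (apply (Hreg t 0); lra).
  assert (G : forall x, 0 <= x <= 2 * PI -> regular t x) by (intros; apply regular_in; auto).
  assert (X1 : ex_RInt (en0 t) 0 (2 * PI)) by (apply ex_RInt_slice; intros; apply cont_en0; auto).
  assert (X2 : ex_RInt (en t) 0 (2 * PI)) by (apply ex_RInt_slice; intros; apply cont_en; auto).
  assert (X3 : ex_RInt (bdry_dt w t) 0 (2 * PI))
    by (apply ex_RInt_slice; intros; apply cont_bdry_dt; auto).
  assert (X4 : ex_RInt (resid w t) 0 (2 * PI))
    by (apply ex_RInt_slice; intros; apply cont_resid; auto).
  assert (X5 : ex_RInt (dist2 t) 0 (2 * PI))
    by (apply ex_RInt_slice; intros; apply cont_dist2; auto).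
  assert (X6 : ex_RInt (defect t) 0 (2 * PI))
    by (apply ex_RInt_slice; intros; apply cont_defect; auto).
  assert (X7 : ex_RInt (pot t) 0 (2 * PI)) by (apply ex_RInt_slice; intros; apply cont_pot; auto).
  assert (X8 : ex_RInt (pot0 t) 0 (2 * PI)) by (apply ex_RInt_slice; intros; apply cont_pot0; auto).
  set (S := fun x => bdry_dt w t x + resid w t x + / 2 * w ^ 2 * dist2 t x - defect t x
                     + (/ 2 * pot0 t x - / 2 * pot t x)).
  assert (Hen : is_RInt S 0 (2 * PI) (/ 2 * (RInt (en0 t) 0 (2 * PI) - RInt (en t) 0 (2 * PI)))).
  { apply (is_RInt_ext (fun x => / 2 * (en0 t x - en t x)));
      [intros x _; apply energy_density_split, Ht'|].
    apply is_RInt_scalR, is_RInt_minusR; apply (@RInt_correct R_CompleteNormedModule); assumption. }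
  assert (HS : is_RInt S 0 (2 * PI)
     (RInt (bdry_dt w t) 0 (2 * PI) + RInt (resid w t) 0 (2 * PI)
      + / 2 * w ^ 2 * RInt (dist2 t) 0 (2 * PI) - RInt (defect t) 0 (2 * PI)
      + (/ 2 * RInt (pot0 t) 0 (2 * PI) - / 2 * RInt (pot t) 0 (2 * PI)))).
  { apply is_RInt_plusR; [apply is_RInt_minusR; [apply is_RInt_plusR;
      [apply is_RInt_plusR|apply is_RInt_scalR]|]|apply is_RInt_minusR; apply is_RInt_scalR];
      apply (@RInt_correct R_CompleteNormedModule); assumption. }
  pose proof (is_RInt_unique _ _ _ _ Hen) as E1. pose proof (is_RInt_unique _ _ _ _ HS) as E2.
  rewrite RInt_pot_eq in E2 by exact Ht'. lra.
Qed.

Definition dist2_total := RInt (fun t => RInt (dist2 t) 0 (2 * PI)) t0 t1.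
Definition defect_total := RInt (fun t => RInt (defect t) 0 (2 * PI)) t0 t1.

Lemma energy_gap_ge_w E E0 : energy phit phix lamt t0 t1 E ->
  energy phi0t phi0x lam0t t0 t1 E0 ->
  / 2 * w ^ 2 * dist2_total - defect_total <= / 2 * (E0 - E).
Proof.
  intros HE HE0.
  destruct (energy_RInt _ _ _ _ HE) as [I [HI HIi]].
  destruct (energy_RInt _ _ _ _ HE0) as [I0 [HI0 HI0i]].
  change (forall t, t0 <= t <= t1 -> I t = RInt (en t) 0 (2 * PI)) in HI.
  change (forall t, t0 <= t <= t1 -> I0 t = RInt (en0 t) 0 (2 * PI)) in HI0.
  assert (iX : is_RInt (fun t => RInt (dist2 t) 0 (2 * PI)) t0 t1 dist2_total).
  { apply RInt_correct, ex_RInt_t0_t1. intros. apply continuous_RInt_regular; auto.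
    apply cont_dist2. }
  assert (iY : is_RInt (fun t => RInt (defect t) 0 (2 * PI)) t0 t1 defect_total).
  { apply RInt_correct, ex_RInt_t0_t1. intros. apply continuous_RInt_regular; auto.
    apply cont_defect. }
  set (W := / 2 * (E0 - E) - 0 - / 2 * w ^ 2 * dist2_total + defect_total).
  assert (iW : is_RInt (fun t => RInt (resid w t) 0 (2 * PI)) t0 t1 W).
  { apply (is_RInt_ext (fun t => / 2 * (I0 t - I t) - RInt (bdry_dt w t) 0 (2 * PI)
                          - / 2 * w ^ 2 * RInt (dist2 t) 0 (2 * PI)
                          + RInt (defect t) 0 (2 * PI))).
    - intros t Ht'. rewrite Rmin_left, Rmax_right in Ht' by lra.
      rewrite HI, HI0, RInt_energy_split by lra.
      match goal with |- ?a = ?b => change (@eq R a b) end. ring.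
    - apply is_RInt_plusR; [|exact iY].
      apply is_RInt_minusR; [apply is_RInt_minusR|apply is_RInt_scalR, iX].
      + apply is_RInt_scalR, is_RInt_minusR; auto.
      + apply RInt_RInt_bdry_dt. }
  assert (HW : 0 <= W).
  { rewrite <- (is_RInt_unique _ _ _ _ iW).
    apply RInt_ge_0; [lra|exists W; exact iW|].
    intros t Ht'. destruct jacobi_region as [r [Hr Hreg]].
    apply RInt_ge_0; [lra| |intros; apply calib_residual_ge0].
    apply ex_RInt_slice. intros x Hx. apply cont_resid; apply (Hreg t x); auto; lra. }
  unfold W in HW. lra.
Qed.

End FixedFrequency.

Let c := PI ^ 2 / (2 * T ^ 2).

Lemma dist2_total_ge0 : 0 <= dist2_total.
Proof.
  apply RInt_ge_0; [lra| |].
  - apply ex_RInt_t0_t1. intros. apply continuous_RInt_regular; auto. apply cont_dist2.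
  - intros t Ht'. apply RInt_ge_0; [lra| |intros; apply polar_dist2_ge0].
    apply ex_RInt_slice. intros. apply cont_dist2, regular_in. lra.
Qed.

Lemma energy_gap_ge E E0 : energy phit phix lamt t0 t1 E ->
  energy phi0t phi0x lam0t t0 t1 E0 ->
  c * dist2_total - defect_total <= / 2 * (E0 - E).
Proof.
  intros HE HE0. apply le_at_limit_PI_div; [apply dist2_total_ge0|unfold T; lra|].
  intros w Hw. apply (energy_gap_ge_w w Hw); assumption.
Qed.

Definition gap_density t x := c * dist2 t x - defect t x.

Lemma gap_density_nonneg t x : t0 <= t <= t1 -> 0 <= gap_density t x.
Proof.
  intros Ht'. unfold gap_density. destruct (Req_dec (dist2 t x) 0) as [E|E].
  - rewrite (defect_eq0 t x Ht' E), E. lra.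
  - pose proof (defect_lt t x Ht' E). fold c in H. lra.
Qed.

Lemma cont_gap_density t x : regular t x -> continuity_2d_pt gap_density t x.
Proof.
  intros H. apply continuity_2d_pt_minus; [|apply cont_defect, H].
  apply continuity_2d_pt_mult; [apply continuity_2d_pt_const|apply cont_dist2, H].
Qed.

Lemma ex_RInt_gap_density t : t0 <= t <= t1 -> ex_RInt (gap_density t) 0 (2 * PI).
Proof. intros Ht'. apply ex_RInt_slice. intros. apply cont_gap_density, regular_in, Ht'. Qed.

Lemma RInt_gap_density_ge0 t : t0 <= t <= t1 -> 0 <= RInt (gap_density t) 0 (2 * PI).
Proof.
  intros Ht'. apply RInt_ge_0; [lra|apply ex_RInt_gap_density, Ht'|].
  intros; apply gap_density_nonneg, Ht'.
Qed.

Lemma RInt_RInt_gap_density :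
  is_RInt (fun t => RInt (gap_density t) 0 (2 * PI)) t0 t1 (c * dist2_total - defect_total).
Proof.
  apply (is_RInt_ext (fun t => c * RInt (dist2 t) 0 (2 * PI) - RInt (defect t) 0 (2 * PI))).
  - intros t Ht'. rewrite Rmin_left, Rmax_right in Ht' by lra.
    symmetry. apply is_RInt_unique. unfold gap_density.
    apply is_RInt_minusR; [apply is_RInt_scalR|];
      apply (@RInt_correct R_CompleteNormedModule), ex_RInt_slice; intros;
      first [apply cont_dist2 | apply cont_defect]; apply regular_in; lra.
  - apply is_RInt_minusR; [apply is_RInt_scalR|];
      apply (@RInt_correct R_CompleteNormedModule), ex_RInt_t0_t1; intros;
      apply continuous_RInt_regular; auto.
    + apply cont_dist2.
    + apply cont_defect.
Qed.

Lemma dist2_vanishes : c * dist2_total - defect_total <= 0 ->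
  forall t x, t0 <= t <= t1 -> 0 <= x <= 2 * PI -> dist2 t x = 0.
Proof.
  intros Hle t x Ht' Hx.
  assert (Hgap : forall s, t0 <= s <= t1 -> RInt (gap_density s) 0 (2 * PI) = 0).
  { apply RInt_nonneg_le0_zero; [exact Ht| |exact RInt_gap_density_ge0|].
    - intros s Hs. apply continuous_RInt_regular; auto. apply cont_gap_density.
    - rewrite (is_RInt_unique _ _ _ _ RInt_RInt_gap_density). exact Hle. }
  assert (Hz : gap_density t x = 0).
  { apply (RInt_nonneg_le0_zero (gap_density t)) with (a := 0) (b := 2 * PI); auto; [lra| | |].
    - intros y Hy. apply continuity_2d_pt_slice_x, cont_gap_density, regular_in, Ht'.
    - intros; apply gap_density_nonneg, Ht'.
    - rewrite Hgap by exact Ht'. lra. }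
  destruct (Req_dec (dist2 t x) 0) as [E|E]; auto.
  exfalso. pose proof (defect_lt t x Ht' E). fold c in H. unfold gap_density in Hz. lra.
Qed.

Definition phase_diff t x := (phi0 t x - phi t x) / (2 * PI).

Lemma cont_phase_diff u v : continuity_2d_pt phase_diff u v.
Proof.
  apply continuity_2d_pt_div; [|apply continuity_2d_pt_const|lra].
  apply continuity_2d_pt_minus; apply smooth2_continuity; assumption.
Qed.

Lemma phase_diff_const : (forall t x, t0 <= t <= t1 -> 0 <= x <= 2 * PI ->
    exists k : Z, phase_diff t x = IZR k) ->
  forall t x, t0 <= t <= t1 -> 0 <= x <= 2 * PI -> phase_diff t x = phase_diff t0 0.
Proof.
  intros Hint t x Ht' Hx.
  rewrite (int_valued_continuous_const (fun u => phase_diff u x) t0 t);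
    [| lra | intros u; apply continuity_pt_filterlim, continuity_2d_pt_slice_t,
               cont_phase_diff | intros s Hs; apply Hint; auto; lra].
  apply (int_valued_continuous_const (fun v => phase_diff t0 v) 0 x);
    [lra | intros v; apply continuity_pt_filterlim, continuity_2d_pt_slice_x,
             cont_phase_diff | intros s Hs; apply Hint; auto; lra].
Qed.

Lemma shift_const : (forall t x, t0 <= t <= t1 -> 0 <= x <= 2 * PI -> dist2 t x = 0) ->
  exists k : Z, forall t x, t0 <= t <= t1 -> phi0 t x = phi t x + 2 * IZR k * PI.
Proof.
  intros H0.
  assert (Hint : forall t x, t0 <= t <= t1 -> 0 <= x <= 2 * PI ->
            exists k : Z, phase_diff t x = IZR k).
  { intros t x Ht' Hx.
    destruct (polar_dist2_eq0 _ _ _ _ (lm_pos t x Ht') (lm0_pos t x Ht') (H0 t x Ht' Hx))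
      as [_ [k Hk]].
    exists k. unfold phase_diff. rewrite Hk. field. lra. }
  destruct (Hint t0 0 ltac:(lra) ltac:(lra)) as [k Hk].
  exists k. intros t x Ht'.
  destruct (angle_reduce PI x) as [m [th [Hth Ex]]].
  assert (Hper : forall y, phi0 t (y + 2 * PI) - phi t (y + 2 * PI) = phi0 t y - phi t y)
    by (intros y; rewrite Hphi_lift, Hphi0_lift; ring).
  pose proof (periodic_2PI_Z (fun y => phi0 t y - phi t y) Hper m (PI + th)) as Hpz.
  simpl in Hpz. rewrite <- Ex in Hpz.
  pose proof (phase_diff_const Hint t (PI + th) Ht' ltac:(lra)) as Hv.
  rewrite Hk in Hv. unfold phase_diff in Hv.
  apply (Rmult_eq_compat_r (2 * PI)) in Hv. unfold Rdiv in Hv.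
  rewrite Rmult_assoc, Rinv_l in Hv by lra. lra.
Qed.

Lemma en_eq_of_shift : (exists k : Z, forall t x, t0 <= t <= t1 ->
    phi0 t x = phi t x + 2 * IZR k * PI) ->
  forall t x, t0 <= t <= t1 -> en0 t x = en t x.
Proof.
  intros [k Hk] t x Ht'.
  assert (Hx : forall s y, t0 <= s <= t1 -> phi0x s y = phix s y)
    by (intros s y Hs; apply (phi0x_eq_of_shift s _ (fun y => Hk s y Hs))).
  assert (Ht0 : phi0t t x = phit t x).
  { apply (derivable_pt_lim_agree_on_interval (fun s => phi0 s x)
             (fun s => phi s x + 2 * IZR k * PI) t0 t1 t _ _ Ht Ht').
    - intros; apply Hk; auto.
    - apply Hphi0t.
    - replace (phit t x) with (phit t x + 0) by ring.
      apply derivable_pt_lim_plus; [apply Hphit|apply derivable_pt_lim_const]. }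
  assert (Hl0 : lam0t t x = lamt t x).
  { apply (derivable_pt_lim_agree_on_interval (fun s => lam phi0x s x) (fun s => lam phix s x)
             t0 t1 t _ _ Ht Ht').
    - intros; unfold lam; rewrite Hx; auto.
    - apply Hlam0t.
    - apply Hlamt. }
  unfold en0, en, lm0, lm, lam. rewrite Hx, Ht0, Hl0 by auto. reflexivity.
Qed.

Lemma energy_comparison E E0 : energy phit phix lamt t0 t1 E ->
  energy phi0t phi0x lam0t t0 t1 E0 ->
  E <= E0 /\ (E = E0 <-> exists k : Z, forall t x, t0 <= t <= t1 ->
                    phi0 t x = phi t x + 2 * IZR k * PI).
Proof.
  intros HE HE0.
  assert (Hgap := energy_gap_ge E E0 HE HE0).
  assert (Hpos : 0 <= c * dist2_total - defect_total).
  { rewrite <- (is_RInt_unique _ _ _ _ RInt_RInt_gap_density).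
    apply RInt_ge_0; [lra|eexists; apply RInt_RInt_gap_density|].
    intros; apply RInt_gap_density_ge0; lra. }
  split; [lra|split].
  - intros ->. apply shift_const, dist2_vanishes. lra.
  - intros Hk.
    destruct (energy_RInt _ _ _ _ HE) as [I [HI HIi]].
    destruct (energy_RInt _ _ _ _ HE0) as [I0 [HI0 HI0i]].
    apply (is_RInt_unique I t0 t1) in HIi. apply (is_RInt_unique I0 t0 t1) in HI0i.
    rewrite <- HIi, <- HI0i. apply RInt_ext. intros t Ht'.
    rewrite Rmin_left, Rmax_right in Ht' by lra.
    rewrite HI, HI0 by lra. apply RInt_ext. intros x _.
    symmetry. apply en_eq_of_shift; auto; lra.
Qed.

End Comparison.

Theorem mainTheorem2
  (t0 t1 : R) (Ht : t0 < t1)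
  (phi phit phitt phix lamt lamtt p px : R -> R -> R)
  (Hphi_smooth : smooth2 phi) (Hphi_lift : circle_lift phi)
  (Hphit : pd_t phi phit) (Hphitt : pd_t phit phitt) (Hphix : pd_x phi phix)
  (Hphix_pos : forall t x, t0 <= t <= t1 -> 0 < phix t x)
  (Hlamt : pd_t (lam phix) lamt) (Hlamtt : pd_t lamt lamtt)
  (Hp_smooth : smooth2 p) (Hp_per : periodic_x p) (Hpx : pd_x p px)
  (Heq1 : forall t x, t0 <= t <= t1 ->
     phitt t x + 2 * (lamt t x / lam phix t x) * phit t x
       = - / 2 * px t (phi t x))
  (Heq2 : forall t x, t0 <= t <= t1 ->
     lamtt t x - lam phix t x * phit t x ^ 2
       = - lam phix t x * p t (phi t x))
  (Hhess : forall t x r w1 w2 h, t0 <= t <= t1 -> 0 < r ->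
     (w1 <> 0 \/ w2 <> 0) ->
     hess_form (p t) x r w1 w2 h ->
     (t1 - t0) ^ 2 * Rabs h < PI ^ 2 * (w1 ^ 2 + w2 ^ 2)) :
  forall (phi0 phi0t phi0x lam0t : R -> R -> R),
    smooth2 phi0 -> circle_lift phi0 ->
    pd_t phi0 phi0t -> pd_x phi0 phi0x ->
    (forall t x, t0 <= t <= t1 -> 0 < phi0x t x) ->
    pd_t (lam phi0x) lam0t ->
    (exists k : Z, forall x, phi0 t0 x = phi t0 x + 2 * IZR k * PI) ->
    (exists k : Z, forall x, phi0 t1 x = phi t1 x + 2 * IZR k * PI) ->
    forall E E0 : R,
      energy phit phix lamt t0 t1 E ->
      energy phi0t phi0x lam0t t0 t1 E0 ->
      E <= E0 /\
      (E = E0 <-> exists k : Z, forall t x, t0 <= t <= t1 ->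
                    phi0 t x = phi t x + 2 * IZR k * PI).
Proof.
  intros phi0 phi0t phi0x lam0t Hphi0_smooth Hphi0_lift Hphi0t Hphi0x Hphi0x_pos Hlam0t
    Hend0 Hend1 E E0 HE HE0.
  destruct (smooth2_ex_pd_t phix (smooth2_pd_x _ _ Hphi_smooth Hphix))
    as [phixt [Hphixt Hphixt_smooth]].
  destruct (smooth2_ex_pd_t phixt Hphixt_smooth) as [phixtt [Hphixtt Hphixtt_smooth]].
  destruct (smooth2_ex_pd_t phi0x (smooth2_pd_x _ _ Hphi0_smooth Hphi0x))
    as [phi0xt [Hphi0xt Hphi0xt_smooth]].
  destruct (smooth2_ex_pd_x px (smooth2_pd_x _ _ Hp_smooth Hpx)) as [pxx [Hpxx _]].
  exact (energy_comparison t0 t1 phi phit phitt phix lamt lamtt p px Ht Hphi_smooth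
    Hphi_lift Hphit Hphitt Hphix Hphix_pos Hlamt Hlamtt Hp_smooth Hp_per Hpx Heq1 Heq2 Hhess
    phi0 phi0t phi0x lam0t Hphi0_smooth Hphi0_lift Hphi0t Hphi0x Hphi0x_pos Hlam0t Hend0 Hend1
    phixt phixtt phi0xt pxx Hphixt Hphixtt Hphixtt_smooth Hphi0xt Hphi0xt_smooth Hpxx
    E E0 HE HE0).
Qed.
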